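(* In the generic model, let $\mathcal P\colon H_R\to\mathbb R[x]$ be the map assigning to each $h\in H_R$ the polynomial with $\lim_{z\to0}\phi_{R,s}(h)=\mathcal P(h)\big(\ln\frac s\mu\big)$ for all $s>0$. Define $L\in\operatorname{End}(\mathbb R[x])$ by $$L(x^n)=-c_{-1}\frac{x^{n+1}}{n+1}+\sum_{i=1}^n\binom ni(-1)^{n-i}(n-i)!\,c_{n-i}\,x^i\qquad(n\ge0),$$ i.e. $L=-c_{-1}\int_0+\delta\eta$ with $\eta(x^n)=n!(-1)^nc_n$. Then $L$ is a Hochschild 1-cocycle of $\mathbb R[x]$ and $\mathcal P=\phi_L$, the unique unital algebra morphism $H_R\to\mathbb R[x]$ with $\phi_L\circ B_+=L\circ\phi_L$. Consequently $\mathcal P$ is a morphism of Hopf algebras.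
   Context: Generic model: $f\colon[0,\infty)\to\mathbb R$ continuous with $f(\zeta)-c/\zeta=O(\zeta^{-1-\epsilon})$ as $\zeta\to\infty$ for some $c\in\mathbb R,\epsilon>0$; Mellin transform $F(z)=\int_0^\infty f(\zeta)\zeta^{-z}d\zeta$ (holomorphic for $0<\operatorname{Re}z<1$, meromorphic near $0$ with Laurent expansion $F(z)=\sum_{n\ge-1}c_nz^n$). $H_R$: Connes–Kreimer Hopf algebra of rooted trees (basis rooted forests $w$, $|w|$ number of nodes, $w_v$ subtree rooted at node $v$, $B_+$ grafting onto a new root, coproduct with $\Delta\circ B_+=B_+\otimes\mathbb 1+(\mathrm{id}\otimes B_+)\circ\Delta$, antipode $S$). Regularized rules: algebra morphism $\phi_s(w)=s^{-z|w|}\prod_{v\in V(w)}F(z|w_v|)$; for fixed $\mu>0$, $\phi_{R,s}:=\phi_\mu^{\star-1}\star\phi_s$, i.e. $\phi_{R,s}(w)=\sum_w\phi_\mu(S(w_1))\phi_s(w_2)$. The limit $z\to0$ exists and is a polynomial in $\ln(s/\mu)$ (so $\mathcal P$ is well defined). $\mathbb R[x]$ carries the Hopf structure with $x$ primitive; $\int_0(x^n)=x^{n+1}/(n+1)$; for $\alpha\in\mathbb R[x]'$, $\delta\alpha=(\mathrm{id}\otimes\alpha)\circ\Delta-\mathbb 1\cdot\alpha$; a 1-cocycle is $L$ with $\Delta\circ L=(\mathrm{id}\otimes L)\circ\Delta+L\otimes\mathbb 1$. *)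

From Stdlib Require Export Reals List Arith.
Export ListNotations.
Open Scope R_scope.

Definition cont_on_nonneg (f : R -> R) : Prop :=
  forall x, 0 <= x -> forall e, 0 < e -> exists d, 0 < d /\
    forall y, 0 <= y -> Rabs (y - x) < d -> Rabs (f y - f x) < e.

Definition asymp_c_over (f : R -> R) (c eps : R) : Prop :=
  exists K M, 0 < M /\ forall zeta, M <= zeta ->
    Rabs (f zeta - c / zeta) <= K * Rpower zeta (- 1 - eps).

(* The improper Riemann integral  int_0^oo f(zeta) zeta^(-z) dzeta  converges to v *)
Definition mellin_at (f : R -> R) (z v : R) : Prop :=
  forall e, 0 < e -> exists d M, 0 < d /\ 0 < M /\
    forall a b, 0 < a < d -> M < b ->
      exists pr : Riemann_integrable (fun zeta => f zeta * Rpower zeta (- z)) a b,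
        Rabs (RiemannInt pr - v) < e.

Inductive tree : Type := Node : list tree -> tree.
(* B_+ (w) = Node w ;  a forest is a list of trees (a monomial of H_R) *)
Definition forest := list tree.

Fixpoint tsize (t : tree) : nat :=
  match t with
  | Node ch => S ((fix go (l : list tree) : nat :=
                     match l with nil => O | t' :: l' => (tsize t' + go l')%nat end) ch)
  end.
Definition fsize (w : forest) : nat := fold_right (fun t n => (tsize t + n)%nat) O w.

(* tensor products H_R (x) H_R: formal sums of pairs of forests (coefficients 1) *)
Definition cross (A B : list (forest * forest)) : list (forest * forest) :=
  flat_map (fun a => map (fun b => (fst a ++ fst b, snd a ++ snd b)) B) A.

(* coproduct: multiplicative, Delta (B_+ w) = B_+ w (x) 1 + (id (x) B_+) Delta w *)
Fixpoint tcoprod (t : tree) : list (forest * forest) :=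
  match t with
  | Node ch =>
      ([Node ch], nil) ::
      map (fun p => (fst p, [Node (snd p)]))
        ((fix go (l : list tree) : list (forest * forest) :=
            match l with
            | nil => [(nil, nil)]
            | t' :: l' => cross (tcoprod t') (go l')
            end) ch)
  end.
Definition fcoprod (w : forest) : list (forest * forest) :=
  fold_right (fun t acc => cross (tcoprod t) acc) [(nil, nil)] w.

(* elements of H_R: formal linear combinations of forests *)
Definition lc := list (R * forest).
Definition lc_mul (A B : lc) : lc :=
  flat_map (fun a => map (fun b => (fst a * fst b, snd a ++ snd b)) B) A.
Definition lc_eval (g : forest -> R) (A : lc) : R :=
  fold_right Rplus 0 (map (fun a => fst a * g (snd a)) A).

(* antipode: multiplicative, S(B_+ w) = - sum_{(w1,w2) in Delta w} S(w1) B_+(w2)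
   (fuel n >= size of the tree) *)
Fixpoint tantip (n : nat) (t : tree) : lc :=
  match n with
  | O => nil
  | S n' =>
      match t with
      | Node ch =>
          let fa := fun w : forest =>
                      fold_right (fun t' acc => lc_mul (tantip n' t') acc) [(1, nil)] w in
          flat_map (fun p => map (fun q => (- fst q, snd q ++ [Node (snd p)]))
                                 (fa (fst p)))
                   (fcoprod ch)
      end
  end.
Definition S_tree (t : tree) : lc := tantip (tsize t) t.
Definition S_forest (w : forest) : lc :=
  fold_right (fun t acc => lc_mul (S_tree t) acc) [(1, nil)] w.

Fixpoint tprodF (F : R -> R) (z : R) (t : tree) : R :=
  match t with
  | Node ch => F (z * INR (tsize (Node ch))) *
      (fix go (l : list tree) : R :=
         match l with nil => 1 | t' :: l' => tprodF F z t' * go l' end) ch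
  end.

Definition phi_s (F : R -> R) (z s : R) (w : forest) : R :=
  Rpower s (- (z * INR (fsize w))) * fold_right (fun t r => tprodF F z t * r) 1 w.

(* phi_{R,s}(w) = sum_{(w1,w2)} phi_mu(S w1) phi_s(w2) *)
Definition phi_R (F : R -> R) (mu z s : R) (w : forest) : R :=
  fold_right Rplus 0
    (map (fun p => lc_eval (phi_s F z mu) (S_forest (fst p)) * phi_s F z s (snd p))
         (fcoprod w)).

(* ---------- Polynomials R[x]: coefficient lists, lowest degree first ---------- *)

Definition poly := list R.
Definition peval (p : poly) (x : R) : R := fold_right (fun a acc => a + x * acc) 0 p.
Fixpoint padd (p q : poly) : poly :=
  match p, q with
  | nil, _ => q
  | _, nil => p
  | a :: p', b :: q' => (a + b) :: padd p' q'
  end.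
Definition pscale (a : R) (p : poly) : poly := map (Rmult a) p.
Fixpoint pmul (p q : poly) : poly :=
  match p with
  | nil => nil
  | a :: p' => padd (pscale a q) (0 :: pmul p' q)
  end.

Definition lsum (p : poly) (g : nat -> R) : R :=
  fold_right Rplus 0 (map (fun i => nth i p 0 * g i) (seq 0 (length p))).

(* L(x^n) = -c_{-1} x^{n+1}/(n+1) + sum_{i=1}^n binom(n,i) (-1)^{n-i} (n-i)! c_{n-i} x^i *)
Definition Lmono (cm1 : R) (c : nat -> R) (n : nat) : poly :=
  map (fun i => if Nat.eqb i 0 then 0
                else if Nat.eqb i (S n) then - cm1 / INR (S n)
                else C n i * (-1) ^ (n - i) * INR (fact (n - i)) * c (n - i)%nat)
      (seq 0 (n + 2)).
Definition Lpoly (cm1 : R) (c : nat -> R) (p : poly) : poly :=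
  fold_right padd nil (map (fun i => pscale (nth i p 0) (Lmono cm1 c i)) (seq 0 (length p))).

(* phi_L: unital algebra morphism with phi_L o B_+ = L o phi_L *)
Fixpoint phiL_t (cm1 : R) (c : nat -> R) (t : tree) : poly :=
  match t with
  | Node ch => Lpoly cm1 c
      ((fix go (l : list tree) : poly :=
          match l with nil => [1] | t' :: l' => pmul (phiL_t cm1 c t') (go l') end) ch)
  end.
Definition phiL (cm1 : R) (c : nat -> R) (w : forest) : poly :=
  fold_right (fun t acc => pmul (phiL_t cm1 c t) acc) [1] w.

(* Hochschild 1-cocycle condition  Delta o L = (id (x) L) o Delta + L (x) 1  on R[x],
   where R[x] (x) R[x] = R[x,y] is identified with polynomial functions of (a,b)
   and Delta p (a,b) = p(a+b). *)
Definition is_1cocycle (cm1 : R) (c : nat -> R) : Prop :=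
  forall (p : poly) (a b : R),
    peval (Lpoly cm1 c p) (a + b) =
      lsum p (fun n => sum_f_R0 (fun k => C n k * a ^ k * peval (Lmono cm1 c (n - k)) b) n)
      + peval (Lpoly cm1 c p) a.

Definition hopf_morphism (P : forest -> poly) : Prop :=
  (forall x, peval (P nil) x = 1) /\
  (forall w1 w2 x, peval (P (w1 ++ w2)) x = peval (P w1) x * peval (P w2) x) /\
  (forall w a b, peval (P w) (a + b) =
     fold_right Rplus 0 (map (fun p => peval (P (fst p)) a * peval (P (snd p)) b) (fcoprod w))) /\
  (forall w, peval (P w) 0 = match w with nil => 1 | _ => 0 end) /\
  (forall w a, lc_eval (fun u => peval (P u) a) (S_forest w) = peval (P w) (- a)).

(* Differentiating L gives (L p)' = -c_{-1} p + sum_m (-1)^m c_m p^(m+1), an operator that commutes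
   with translations.  Hence q(a + y) = sum_i a_i q_i(y) implies (L q)(a + y) = (L q)(a) + sum_i a_i (L q_i)(y):
   for q = x^n this is the cocycle identity, and by induction on trees it is the compatibility of phi_L
   with the coproduct; evaluating the latter at (-a, a) gives compatibility with the antipode.

   For the limit put s = mu e^t.  The regularized rule becomes a finite exponential sum in t, and we show
   by induction on trees that each of its t-derivatives converges, as z -> 0, to the corresponding
   derivative of phi_L: for products by the Leibniz rule; for B_+ w, at order k >= 1 by expanding the new
   root factor F(z(|w|+1)) (-z(|w|+1))^k with the Laurent series of F, and at order 0 by Taylor expansion
   in t, the order-0 term vanishing at t = 0.  The remainders vanish because every vertex contributes only
   a factor O(1/z). *)

From Stdlib Require Import Lra Lia.
From Coquelicot Require Import Hierarchy Derive.

Fixpoint sum_below (n : nat) (f : nat -> R) : R :=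
  match n with O => 0 | S n => sum_below n f + f n end.

Lemma sum_below_ext n f g :
  (forall i, (i < n)%nat -> f i = g i) -> sum_below n f = sum_below n g.
Proof. induction n; simpl; intros; auto. rewrite IHn, H; auto. Qed.

Lemma sum_below_plus n f g :
  sum_below n (fun i => f i + g i) = sum_below n f + sum_below n g.
Proof. induction n; simpl; [lra|]. rewrite IHn; lra. Qed.

Lemma sum_below_scal_l n a f : sum_below n (fun i => a * f i) = a * sum_below n f.
Proof. induction n; simpl; [lra|]. rewrite IHn; lra. Qed.

Lemma sum_below_scal_r n a f : sum_below n (fun i => f i * a) = sum_below n f * a.
Proof. induction n; simpl; [lra|]. rewrite IHn; lra. Qed.

Lemma sum_below_zero n f : (forall i, (i < n)%nat -> f i = 0) -> sum_below n f = 0.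
Proof. induction n; simpl; intros; auto. rewrite IHn, H; auto; lra. Qed.

Lemma sum_below_Sl n f : sum_below (S n) f = f O + sum_below n (fun i => f (S i)).
Proof. induction n; simpl in *; [lra|]. rewrite IHn; lra. Qed.

Lemma sum_below_add n m f :
  sum_below (n + m) f = sum_below n f + sum_below m (fun i => f (n + i)%nat).
Proof.
  induction m; simpl; [rewrite Nat.add_0_r; lra|].
  rewrite Nat.add_succ_r; simpl; rewrite IHm; lra.
Qed.

Lemma sum_below_exchange n m (f : nat -> nat -> R) :
  sum_below n (fun i => sum_below m (f i)) = sum_below m (fun j => sum_below n (fun i => f i j)).
Proof.
  induction n; simpl; [symmetry; apply sum_below_zero; auto|].
  rewrite IHn, <- sum_below_plus; auto.
Qed.

Lemma sum_below_rev n f : sum_below n f = sum_below n (fun i => f (n - 1 - i)%nat).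
Proof.
  induction n; auto.
  rewrite (sum_below_Sl n (fun i => f (S n - 1 - i)%nat)); simpl sum_below at 1.
  rewrite IHn. replace (S n - 1 - 0)%nat with n by lia.
  rewrite Rplus_comm. f_equal. apply sum_below_ext; intros; f_equal; lia.
Qed.

Lemma sum_f_R0_sum_below f n : sum_f_R0 f n = sum_below (S n) f.
Proof. induction n; simpl in *; [lra|]. rewrite IHn; auto. Qed.

Lemma sum_below_widen n m f :
  (n <= m)%nat -> (forall i, (n <= i < m)%nat -> f i = 0) -> sum_below m f = sum_below n f.
Proof.
  intros Hnm Hf. replace m with (n + (m - n))%nat by lia.
  rewrite sum_below_add, (sum_below_zero (m - n)); [lra|]. intros; apply Hf; lia.
Qed.

Lemma sum_below_abs n f : Rabs (sum_below n f) <= sum_below n (fun i => Rabs (f i)).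
Proof.
  induction n; simpl; [rewrite Rabs_R0; lra|].
  eapply Rle_trans; [apply Rabs_triang|]. lra.
Qed.

Lemma sum_below_le n f g :
  (forall i, (i < n)%nat -> f i <= g i) -> sum_below n f <= sum_below n g.
Proof.
  induction n; simpl; intros Hfg; [lra|].
  assert (f n <= g n) by (apply Hfg; lia).
  assert (sum_below n f <= sum_below n g) by (apply IHn; intros; apply Hfg; lia). lra.
Qed.

Lemma sum_below_nonneg n f : (forall i, 0 <= f i) -> 0 <= sum_below n f.
Proof. intros Hf; induction n; simpl; [lra|]. specialize (Hf n); lra. Qed.

Lemma sum_below_term_le f n i :
  (forall j, 0 <= f j) -> (i < n)%nat -> f i <= sum_below n f.
Proof.
  intros Hf Hi. replace n with (S i + (n - S i))%nat by lia.
  rewrite sum_below_add; simpl.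
  pose proof (sum_below_nonneg i f Hf).
  pose proof (sum_below_nonneg (n - S i) (fun j => f (S (i + j))) (fun j => Hf _)).
  lra.
Qed.

Lemma INR_fact_neq0 n : INR (fact n) <> 0.
Proof. apply not_0_INR, fact_neq_0. Qed.

Lemma INR_fact_S n : INR (fact (S n)) = INR (S n) * INR (fact n).
Proof. apply mult_INR. Qed.

Lemma binom_n_n n : Binomial.C n n = 1.
Proof. unfold Binomial.C. rewrite Nat.sub_diag. simpl (fact 0). simpl (INR 1). field. apply INR_fact_neq0. Qed.

Lemma binom_n_0 n : Binomial.C n 0 = 1.
Proof. unfold Binomial.C. rewrite Nat.sub_0_r. simpl (fact 0). simpl (INR 1). field. apply INR_fact_neq0. Qed.

Lemma binomial_sum_below a b n :
  (a + b) ^ n = sum_below (S n) (fun i => Binomial.C n i * a ^ i * b ^ (n - i)).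
Proof. rewrite binomial, sum_f_R0_sum_below. reflexivity. Qed.

Definition sumL {A} (f : A -> R) (l : list A) : R := fold_right Rplus 0 (map f l).

Lemma sumL_cons {A} (f : A -> R) a l : sumL f (a :: l) = f a + sumL f l.
Proof. reflexivity. Qed.

Lemma sumL_app {A} (f : A -> R) l1 l2 : sumL f (l1 ++ l2) = sumL f l1 + sumL f l2.
Proof. induction l1; simpl; [unfold sumL; simpl; lra|]. rewrite !sumL_cons, IHl1; lra. Qed.

Lemma sumL_ext {A} (f g : A -> R) l :
  (forall a, In a l -> f a = g a) -> sumL f l = sumL g l.
Proof.
  induction l; intros Hfg; auto.
  rewrite !sumL_cons, Hfg, IHl; simpl; auto. intros; apply Hfg; simpl; auto.
Qed.

Lemma sumL_zero {A} (l : list A) : sumL (fun _ => 0) l = 0.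
Proof. induction l; auto. rewrite sumL_cons, IHl; lra. Qed.

Lemma sumL_plus {A} (f g : A -> R) l : sumL (fun a => f a + g a) l = sumL f l + sumL g l.
Proof. induction l; [unfold sumL; simpl; lra|]. rewrite !sumL_cons, IHl; lra. Qed.

Lemma sumL_scal_l {A} (f : A -> R) c l : sumL (fun a => c * f a) l = c * sumL f l.
Proof. induction l; [unfold sumL; simpl; lra|]. rewrite !sumL_cons, IHl; lra. Qed.

Lemma sumL_scal_r {A} (f : A -> R) c l : sumL (fun a => f a * c) l = sumL f l * c.
Proof. induction l; [unfold sumL; simpl; lra|]. rewrite !sumL_cons, IHl; lra. Qed.

Lemma sumL_opp {A} (f : A -> R) l : sumL (fun a => - f a) l = - sumL f l.
Proof. induction l; [unfold sumL; simpl; lra|]. rewrite !sumL_cons, IHl; lra. Qed.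

Lemma sumL_map {A B} (f : B -> R) (g : A -> B) l :
  sumL f (map g l) = sumL (fun a => f (g a)) l.
Proof. unfold sumL. rewrite map_map; auto. Qed.

Lemma sumL_flat_map {A B} (f : B -> R) (g : A -> list B) l :
  sumL f (flat_map g l) = sumL (fun a => sumL f (g a)) l.
Proof. induction l; auto. simpl. rewrite sumL_app, sumL_cons, IHl; auto. Qed.

Lemma sumL_sum_below {A} (f : A -> nat -> R) n l :
  sumL (fun a => sum_below n (f a)) l = sum_below n (fun i => sumL (fun a => f a i) l).
Proof.
  induction l; [unfold sumL; simpl; symmetry; apply sum_below_zero; auto|].
  rewrite sumL_cons, IHl, <- sum_below_plus.
  apply sum_below_ext; intros; rewrite sumL_cons; auto.
Qed.

Lemma sumL_abs {A} (f : A -> R) l : Rabs (sumL f l) <= sumL (fun a => Rabs (f a)) l.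
Proof.
  induction l; [unfold sumL; simpl; rewrite Rabs_R0; lra|].
  rewrite !sumL_cons. eapply Rle_trans; [apply Rabs_triang|]. lra.
Qed.

Lemma sumL_le {A} (f g : A -> R) l :
  (forall a, In a l -> f a <= g a) -> sumL f l <= sumL g l.
Proof.
  induction l; intros Hfg; [unfold sumL; simpl; lra|]. rewrite !sumL_cons.
  assert (f a <= g a) by (apply Hfg; simpl; auto).
  assert (sumL f l <= sumL g l) by (apply IHl; intros; apply Hfg; simpl; auto). lra.
Qed.

Lemma sumL_seq_from (h : nat -> R) s n :
  sumL h (seq s n) = sum_below n (fun i => h (s + i)%nat).
Proof.
  revert s; induction n; intros s; auto. cbn [seq]. rewrite sumL_cons, IHn, sum_below_Sl.
  rewrite Nat.add_0_r. f_equal. apply sum_below_ext; intros; f_equal; lia.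
Qed.

Lemma sumL_seq (h : nat -> R) n : sumL h (seq 0 n) = sum_below n h.
Proof. apply sumL_seq_from. Qed.

(** * Polynomials *)

Lemma peval_cons a p x : peval (a :: p) x = a + x * peval p x.
Proof. reflexivity. Qed.

Lemma peval_padd p q x : peval (padd p q) x = peval p x + peval q x.
Proof.
  revert q; induction p; intros q; [simpl; lra|]. destruct q; [simpl; lra|].
  cbn [padd]. rewrite !peval_cons, IHp. lra.
Qed.

Lemma peval_pscale a p x : peval (pscale a p) x = a * peval p x.
Proof. induction p; [simpl; lra|]. unfold pscale in *; cbn [map]. rewrite !peval_cons, IHp. lra. Qed.

Lemma peval_pmul p q x : peval (pmul p q) x = peval p x * peval q x.
Proof.
  induction p; [simpl; lra|]. cbn [pmul].
  rewrite peval_padd, peval_pscale, peval_cons, IHp, peval_cons. lra.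
Qed.

Lemma peval_0 p : peval p 0 = nth 0 p 0.
Proof. destruct p; simpl; lra. Qed.

Lemma nth_padd p q i : nth i (padd p q) 0 = nth i p 0 + nth i q 0.
Proof.
  revert q i; induction p; intros q i; simpl; [destruct i; lra|].
  destruct q, i; simpl; try lra. apply IHp.
Qed.

Lemma length_padd p q : length (padd p q) = Nat.max (length p) (length q).
Proof. revert q; induction p; intros q; simpl; auto. destruct q; simpl; auto. Qed.

Lemma peval_coef p x n :
  (length p <= n)%nat -> peval p x = sum_below n (fun i => nth i p 0 * x ^ i).
Proof.
  revert n; induction p; intros n Hn.
  - symmetry; apply sum_below_zero; intros i _; destruct i; simpl; lra.
  - destruct n; simpl in Hn; [lia|].
    rewrite peval_cons, sum_below_Sl, (IHp n), <- sum_below_scal_l by lia.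
    simpl. f_equal; [lra|]. apply sum_below_ext; intros; simpl; lra.
Qed.

Fixpoint pder (p : poly) : poly :=
  match p with nil => nil | a :: p' => padd p' (0 :: pder p') end.

Definition pder_iter (k : nat) (p : poly) : poly := Nat.iter k pder p.

Lemma pder_iter_S k p : pder_iter (S k) p = pder (pder_iter k p).
Proof. reflexivity. Qed.

Lemma nth_pder p i : nth i (pder p) 0 = INR (S i) * nth (S i) p 0.
Proof.
  revert i; induction p; intros i; simpl; [destruct i; simpl; lra|].
  rewrite nth_padd. destruct i; simpl; [lra|].
  rewrite IHp, S_INR. simpl. destruct i; simpl; lra.
Qed.

Lemma length_pder p : (length (pder p) <= length p)%nat.
Proof. induction p; simpl; auto. rewrite length_padd; simpl; lia. Qed.

Lemma length_pder_iter k p : (length (pder_iter k p) <= length p)%nat.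
Proof. induction k; auto. rewrite pder_iter_S. eapply Nat.le_trans; [apply length_pder|]; auto. Qed.

Lemma nth_pder_iter k p i :
  nth i (pder_iter k p) 0 = INR (fact (i + k)) / INR (fact i) * nth (i + k) p 0.
Proof.
  revert i; induction k; intros i.
  - simpl. rewrite Nat.add_0_r. field. apply INR_fact_neq0.
  - rewrite pder_iter_S, nth_pder, IHk. replace (S i + k)%nat with (i + S k)%nat by lia.
    rewrite INR_fact_S. field. split; [apply INR_fact_neq0|apply not_0_INR; lia].
Qed.

Definition dmono (j i : nat) (x : R) : R :=
  if Nat.leb j i then INR (fact i) / INR (fact (i - j)) * x ^ (i - j) else 0.

Lemma dmono_lt j i x : (i < j)%nat -> dmono j i x = 0.
Proof. intros; unfold dmono. destruct (Nat.leb_spec j i); [lia|auto]. Qed.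

Lemma peval_pder_iter k p x :
  peval (pder_iter k p) x = sum_below (length p) (fun i => nth i p 0 * dmono k i x).
Proof.
  rewrite (peval_coef _ _ (length p)) by apply length_pder_iter.
  rewrite <- (sum_below_widen (length p) (k + length p) (fun i => nth i p 0 * dmono k i x))
    by (try lia; intros; rewrite nth_overflow by lia; lra).
  rewrite sum_below_add, (sum_below_zero k) by (intros; rewrite dmono_lt by lia; lra).
  rewrite Rplus_0_l. apply sum_below_ext; intros. rewrite nth_pder_iter. unfold dmono.
  destruct (Nat.leb_spec k (k + i)); [|lia]. replace (k + i - k)%nat with i by lia.
  rewrite (Nat.add_comm i k). lra.
Qed.

Lemma peval_taylor p t J :
  (length p <= S J)%nat ->
  peval p t = sum_below (S J) (fun j => t ^ j / INR (fact j) * peval (pder_iter j p) 0).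
Proof.
  intros HJ. rewrite (peval_coef _ _ (S J)) by auto. apply sum_below_ext; intros.
  rewrite peval_0, nth_pder_iter. simpl. field. apply INR_fact_neq0.
Qed.

Fixpoint pmono (n : nat) : poly := match n with O => 1 :: nil | S n => 0 :: pmono n end.

Lemma peval_pmono n x : peval (pmono n) x = x ^ n.
Proof. induction n; simpl in *; try lra. rewrite IHn; lra. Qed.

Lemma length_pmono n : length (pmono n) = S n.
Proof. induction n; simpl; auto. Qed.

Lemma nth_pmono n i : nth i (pmono n) 0 = if Nat.eqb i n then 1 else 0.
Proof. revert i; induction n; destruct i; simpl; auto. destruct i; auto. Qed.

Lemma is_derive_val (f : R -> R) x l l' : is_derive f x l -> l = l' -> is_derive f x l'.
Proof. intros; subst; auto. Qed.

Lemma is_derive_zero x : is_derive (fun _ : R => 0) x 0.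
Proof. apply (is_derive_const (V := R_NormedModule) 0). Qed.

Lemma is_derive_peval p x : is_derive (peval p) x (peval (pder p) x).
Proof.
  revert x; induction p; intros x; [apply is_derive_zero|].
  apply (is_derive_ext (fun x => a + x * peval p x)); [reflexivity|].
  eapply is_derive_val.
  - apply (is_derive_plus (fun _ => a) (fun x => x * peval p x)); [apply is_derive_const|].
    apply (is_derive_mult (fun x => x) (peval p)); [apply is_derive_id|apply IHp].
  - simpl. rewrite peval_padd, peval_cons. unfold plus, mult, zero, one; simpl. lra.
Qed.

Lemma is_derive_peval_shift p a y :
  is_derive (fun y => peval p (a + y)) y (peval (pder p) (a + y)).
Proof.
  eapply is_derive_val.
  - apply (is_derive_comp (peval p) (fun y => a + y)); [apply is_derive_peval|].
    apply (is_derive_plus (fun _ => a) (fun y => y)); [apply is_derive_const|apply is_derive_id].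
  - unfold scal, plus, zero, one; simpl. unfold mult; simpl. lra.
Qed.

Lemma is_derive_sumL {A} (g : A -> R -> R) (dg : A -> R) (l : list A) y :
  (forall a, In a l -> is_derive (g a) y (dg a)) ->
  is_derive (fun y => sumL (fun a => g a y) l) y (sumL dg l).
Proof.
  induction l; intros Hg; [apply is_derive_zero|].
  rewrite sumL_cons. apply (is_derive_plus (g a)); [apply Hg; simpl; auto|].
  apply IHl. intros; apply Hg; simpl; auto.
Qed.

Lemma is_derive_sum_below (g : nat -> R -> R) (dg : nat -> R) n y :
  (forall i, (i < n)%nat -> is_derive (g i) y (dg i)) ->
  is_derive (fun y => sum_below n (fun i => g i y)) y (sum_below n dg).
Proof.
  induction n; intros Hg; [apply is_derive_zero|].
  apply (is_derive_plus (fun y => sum_below n (fun i => g i y)) (g n)); [|apply Hg; lia].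
  apply IHn; intros; apply Hg; lia.
Qed.

Lemma eq_of_derive_eq (f g h : R -> R) :
  (forall x, is_derive f x (h x)) -> (forall x, is_derive g x (h x)) -> f 0 = g 0 ->
  forall x, f x = g x.
Proof.
  intros Hf Hg H0 x.
  assert (Hd : forall t, is_derive (fun t => f t - g t) t 0).
  { intros t. eapply is_derive_val; [apply (is_derive_minus f g); [apply Hf|apply Hg]|].
    unfold minus, plus, opp; simpl. lra. }
  destruct (Rtotal_order x 0) as [Hx|[Hx|Hx]].
  - assert (E := eq_is_derive (fun t => f t - g t) x 0 (fun t _ => Hd t) Hx). simpl in E. lra.
  - subst; auto.
  - assert (E := eq_is_derive (fun t => f t - g t) 0 x (fun t _ => Hd t) Hx). simpl in E. lra.
Qed.

Definition lincomb (l : list (R * poly)) (y : R) : R := sumL (fun q => fst q * peval (snd q) y) l.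

Lemma lincomb_derive l y :
  is_derive (lincomb l) y (lincomb (map (fun q => (fst q, pder (snd q))) l) y).
Proof.
  unfold lincomb. rewrite sumL_map.
  apply is_derive_sumL. intros q _. apply is_derive_scal, is_derive_peval.
Qed.

Lemma pder_iter_shift_lincomb p a l :
  (forall y, peval p (a + y) = lincomb l y) ->
  forall k y, peval (pder_iter k p) (a + y) =
              lincomb (map (fun q => (fst q, pder_iter k (snd q))) l) y.
Proof.
  intros Hp k; induction k; intros y.
  - simpl. rewrite Hp. unfold lincomb. rewrite sumL_map. reflexivity.
  - assert (H1 := is_derive_peval_shift (pder_iter k p) a y).
    assert (H2 := lincomb_derive (map (fun q => (fst q, pder_iter k (snd q))) l) y).
    apply is_derive_unique in H1. apply is_derive_unique in H2.
    rewrite <- pder_iter_S in H1.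
    rewrite map_map in H2. rewrite <- H1.
    etransitivity; [apply Derive_ext, IHk|exact H2].
Qed.

Lemma pder_iter_lincomb p l :
  (forall y, peval p y = lincomb l y) ->
  forall k y, peval (pder_iter k p) y = lincomb (map (fun q => (fst q, pder_iter k (snd q))) l) y.
Proof.
  intros Hp k y. rewrite <- (Rplus_0_l y) at 1.
  apply pder_iter_shift_lincomb. intros; rewrite Rplus_0_l; apply Hp.
Qed.

Lemma binomial_pascal_sum (a b : nat -> R) k :
  sum_below (S k) (fun i => Binomial.C k i * (a (S i) * b (k - i)%nat + a i * b (S (k - i))))
  = sum_below (S (S k)) (fun i => Binomial.C (S k) i * a i * b (S k - i)%nat).
Proof.
  rewrite (sum_below_ext (S k) _ (fun i => Binomial.C k i * a (S i) * b (k - i)%nat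
                                           + Binomial.C k i * a i * b (S k - i)%nat))
    by (intros; replace (S (k - i)) with (S k - i)%nat by lia; ring).
  rewrite sum_below_plus.
  change (sum_below (S k) (fun i => Binomial.C k i * a (S i) * b (k - i)%nat))
    with (sum_below k (fun i => Binomial.C k i * a (S i) * b (k - i)%nat)
          + Binomial.C k k * a (S k) * b (k - k)%nat).
  rewrite (sum_below_Sl k (fun i => Binomial.C k i * a i * b (S k - i)%nat)).
  rewrite (sum_below_Sl (S k) (fun i => Binomial.C (S k) i * a i * b (S k - i)%nat)).
  change (sum_below (S k) (fun i => Binomial.C (S k) (S i) * a (S i) * b (S k - S i)%nat))
    with (sum_below k (fun i => Binomial.C (S k) (S i) * a (S i) * b (S k - S i)%nat)
          + Binomial.C (S k) (S k) * a (S k) * b (S k - S k)%nat).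
  rewrite (sum_below_ext k (fun i => Binomial.C (S k) (S i) * a (S i) * b (S k - S i)%nat)
    (fun i => Binomial.C k i * a (S i) * b (k - i)%nat + Binomial.C k (S i) * a (S i) * b (S k - S i)%nat))
    by (intros; rewrite <- pascal by auto; simpl (S k - S i)%nat; ring).
  rewrite sum_below_plus, !binom_n_n, !binom_n_0, !Nat.sub_diag. ring.
Qed.

Lemma peval_pder_iter_pmul p q k x :
  peval (pder_iter k (pmul p q)) x
  = sum_below (S k) (fun i => Binomial.C k i * peval (pder_iter i p) x * peval (pder_iter (k - i) q) x).
Proof.
  revert x. induction k; intros x; [simpl; rewrite peval_pmul, binom_n_0; ring|].
  assert (H1 := is_derive_peval (pder_iter k (pmul p q)) x).
  assert (H2 : is_derive (fun y => sum_below (S k) (fun i => Binomial.C k i * peval (pder_iter i p) y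
                                                        * peval (pder_iter (k - i) q) y)) x
     (sum_below (S k) (fun i => Binomial.C k i * (peval (pder_iter (S i) p) x * peval (pder_iter (k - i) q) x
                                               + peval (pder_iter i p) x * peval (pder_iter (S (k - i)) q) x)))).
  { apply is_derive_sum_below. intros i _.
    apply (is_derive_ext (fun y => Binomial.C k i * (peval (pder_iter i p) y * peval (pder_iter (k - i) q) y)));
      [intros; symmetry; apply Rmult_assoc|].
    eapply is_derive_val.
    - apply (is_derive_scal (fun y => peval (pder_iter i p) y * peval (pder_iter (k - i) q) y)).
      apply (is_derive_mult (peval (pder_iter i p))); apply is_derive_peval.
    - unfold plus, mult; simpl. ring. }
  apply is_derive_unique in H1. apply is_derive_unique in H2.
  rewrite pder_iter_S, <- H1.
  etransitivity; [apply Derive_ext; intros; apply IHk|].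
  etransitivity; [exact H2|].
  apply (binomial_pascal_sum (fun i => peval (pder_iter i p) x) (fun i => peval (pder_iter i q) x)).
Qed.

(** * The operator L and its cocycle property *)

Section LOperator.

Variables (cm1 : R) (c : nat -> R).

Definition Lcoef (n i : nat) : R :=
  if Nat.eqb i 0 then 0
  else if Nat.eqb i (S n) then - cm1 / INR (S n)
  else Binomial.C n i * (-1) ^ (n - i) * INR (fact (n - i)) * c (n - i)%nat.

Lemma length_Lmono n : length (Lmono cm1 c n) = (n + 2)%nat.
Proof. unfold Lmono. rewrite length_map, length_seq; auto. Qed.

Lemma nth_Lmono n i :
  nth i (Lmono cm1 c n) 0 = if Nat.ltb i (n + 2) then Lcoef n i else 0.
Proof.
  destruct (Nat.ltb_spec i (n + 2)).
  - unfold Lmono. rewrite (nth_indep _ 0 (Lcoef n 0)) by (rewrite length_map, length_seq; auto).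
    rewrite map_nth, seq_nth; auto.
  - apply nth_overflow. rewrite length_Lmono; lia.
Qed.

Lemma Lmono_at0 n : peval (Lmono cm1 c n) 0 = 0.
Proof. rewrite peval_0, nth_Lmono. simpl. unfold Lcoef. simpl. destruct (n + 2)%nat; auto. Qed.

Lemma Lmono_deriv n x :
  peval (pder (Lmono cm1 c n)) x
  = - cm1 * x ^ n + sum_below n (fun m => (-1) ^ m * c m * dmono (S m) n x).
Proof.
  change (pder (Lmono cm1 c n)) with (pder_iter 1 (Lmono cm1 c n)).
  rewrite peval_pder_iter, length_Lmono. replace (n + 2)%nat with (S (S n)) by lia.
  rewrite sum_below_Sl. simpl sum_below.
  rewrite !nth_Lmono. destruct (Nat.ltb_spec 0 (n + 2)); [|lia].
  destruct (Nat.ltb_spec (S n) (n + 2)); [|lia].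
  replace (Lcoef n 0) with 0 by reflexivity.
  replace (Lcoef n (S n)) with (- cm1 / INR (S n))
    by (unfold Lcoef; simpl Nat.eqb; rewrite Nat.eqb_refl; auto).
  replace (dmono 1 (S n) x) with (INR (fact (S n)) / INR (fact n) * x ^ n)
    by (unfold dmono; simpl Nat.leb; replace (S n - 1)%nat with n by lia; auto).
  rewrite INR_fact_S, sum_below_rev with (f := fun m => (-1) ^ m * c m * dmono (S m) n x).
  rewrite (sum_below_ext n (fun i => nth (S i) (Lmono cm1 c n) 0 * dmono 1 (S i) x)
             (fun i => (-1) ^ (n - 1 - i) * c (n - 1 - i)%nat * dmono (S (n - 1 - i)) n x)).
  - field. split; [apply INR_fact_neq0|apply not_0_INR; lia].
  - intros i Hi. rewrite nth_Lmono. destruct (Nat.ltb_spec (S i) (n + 2)); [|lia].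
    unfold Lcoef. simpl Nat.eqb. destruct (Nat.eqb_spec i n); [lia|].
    unfold dmono. rewrite !(proj2 (Nat.leb_le _ _)) by lia.
    replace (S i - 1)%nat with i by lia. replace (n - S (n - 1 - i))%nat with i by lia.
    unfold Binomial.C. rewrite INR_fact_S.
    replace (n - S i)%nat with (n - 1 - i)%nat by lia.
    field. repeat split; try apply INR_fact_neq0; apply not_0_INR; lia.
Qed.

Lemma peval_Lpoly q y :
  peval (Lpoly cm1 c q) y = sum_below (length q) (fun i => nth i q 0 * peval (Lmono cm1 c i) y).
Proof.
  unfold Lpoly. rewrite <- sumL_seq. generalize (seq 0 (length q)).
  induction l; auto. simpl. rewrite peval_padd, IHl, sumL_cons, peval_pscale; auto.
Qed.

Lemma Lpoly_at0 q : peval (Lpoly cm1 c q) 0 = 0.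
Proof. rewrite peval_Lpoly. apply sum_below_zero; intros. rewrite Lmono_at0; lra. Qed.

Lemma Lpoly_pmono n y : peval (Lpoly cm1 c (pmono n)) y = peval (Lmono cm1 c n) y.
Proof.
  rewrite peval_Lpoly, length_pmono. simpl.
  rewrite sum_below_zero, nth_pmono, Nat.eqb_refl; [lra|].
  intros i Hi. rewrite nth_pmono. destruct (Nat.eqb_spec i n); [lia|lra].
Qed.

Lemma Lpoly_deriv q M x :
  (length q <= M)%nat ->
  peval (pder (Lpoly cm1 c q)) x
  = - cm1 * peval q x + sum_below M (fun m => (-1) ^ m * c m * peval (pder_iter (S m) q) x).
Proof.
  intros HM.
  assert (Hl : forall y, peval (Lpoly cm1 c q) y =
     lincomb (map (fun i => (nth i q 0, Lmono cm1 c i)) (seq 0 (length q))) y).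
  { intros y. rewrite peval_Lpoly. unfold lincomb. rewrite sumL_map, sumL_seq. auto. }
  change (pder (Lpoly cm1 c q)) with (pder_iter 1 (Lpoly cm1 c q)).
  rewrite (pder_iter_lincomb _ _ Hl 1 x). unfold lincomb.
  rewrite !sumL_map, sumL_seq. cbn [fst snd].
  rewrite (peval_coef q x (length q)) by auto.
  rewrite (sum_below_ext M _ (fun m => sum_below (length q)
             (fun i => (-1) ^ m * c m * (nth i q 0 * dmono (S m) i x))))
    by (intros; rewrite peval_pder_iter, <- sum_below_scal_l; auto).
  rewrite sum_below_exchange, <- sum_below_scal_l, <- sum_below_plus.
  apply sum_below_ext; intros i Hi. simpl pder_iter. rewrite Lmono_deriv.
  rewrite (sum_below_widen i M) by (try lia; intros; rewrite dmono_lt by lia; lra).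
  rewrite (sum_below_ext i (fun j => (-1) ^ j * c j * (nth i q 0 * dmono (S j) i x))
             (fun j => nth i q 0 * ((-1) ^ j * c j * dmono (S j) i x))) by (intros; lra).
  rewrite sum_below_scal_l. lra.
Qed.

Lemma Lpoly_pder_iter_S q M k x :
  (length q <= M)%nat ->
  peval (pder_iter (S k) (Lpoly cm1 c q)) x
  = - cm1 * peval (pder_iter k q) x
    + sum_below M (fun m => c m * (-1) ^ m * peval (pder_iter (m + S k) q) x).
Proof.
  intros HM. unfold pder_iter. rewrite Nat.iter_succ_r. fold (pder_iter k (pder (Lpoly cm1 c q))).
  assert (E : forall y, peval (pder (Lpoly cm1 c q)) y =
     lincomb ((- cm1, q) :: map (fun m => ((-1) ^ m * c m, pder_iter (S m) q)) (seq 0 M)) y).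
  { intros y. rewrite (Lpoly_deriv q M y HM). unfold lincomb.
    rewrite sumL_cons, sumL_map, sumL_seq. auto. }
  rewrite (pder_iter_lincomb _ _ E). unfold lincomb.
  rewrite map_cons, sumL_cons, map_map, sumL_map, sumL_seq. cbn [fst snd].
  f_equal. apply sum_below_ext; intros. unfold pder_iter. rewrite <- Nat.iter_add.
  replace (k + S i)%nat with (i + S k)%nat by lia. ring.
Qed.

(* [(L q)'] is a fixed combination of derivatives of [q] ([Lpoly_deriv]), so both sides have the
   same derivative in [y]; they agree at [y = 0] because [L q] vanishes at [0]. *)
Lemma Lpoly_shift_lincomb q a l :
  (forall y, peval q (a + y) = lincomb l y) ->
  forall y, peval (Lpoly cm1 c q) (a + y)
            = peval (Lpoly cm1 c q) a + sumL (fun r => fst r * peval (Lpoly cm1 c (snd r)) y) l.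
Proof.
  intros Hq.
  set (M := fold_right Nat.max (length q) (map (fun r => length (snd r)) l)).
  assert (HMq : (length q <= M)%nat).
  { unfold M. clear. induction l; simpl; lia. }
  assert (HMl : forall r, In r l -> (length (snd r) <= M)%nat).
  { unfold M. clear. induction l; simpl; intros r Hr; [contradiction|].
    destruct Hr as [<-|Hr]; [apply Nat.le_max_l|].
    etransitivity; [apply IHl, Hr|apply Nat.le_max_r]. }
  apply (eq_of_derive_eq _ _ (fun y => peval (pder (Lpoly cm1 c q)) (a + y))).
  - intros; apply is_derive_peval_shift.
  - intros x. eapply is_derive_val.
    { apply (is_derive_plus (fun _ => peval (Lpoly cm1 c q) a)); [apply is_derive_const|].
      apply (is_derive_sumL _ (fun r => fst r * peval (pder (Lpoly cm1 c (snd r))) x)).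
      intros r _. apply is_derive_scal, is_derive_peval. }
    change (plus (zero : R_NormedModule) ?v) with (0 + v). rewrite Rplus_0_l.
    rewrite (Lpoly_deriv q M) by auto.
    rewrite (sumL_ext _ (fun r => - cm1 * (fst r * peval (snd r) x) + sum_below M
        (fun m => (-1) ^ m * c m * (fst r * peval (pder_iter (S m) (snd r)) x)))).
    2:{ intros r Hr. rewrite (Lpoly_deriv _ M) by auto.
        rewrite Rmult_plus_distr_l, <- sum_below_scal_l. f_equal; [ring|].
        apply sum_below_ext; intros; ring. }
    rewrite sumL_plus, sumL_scal_l, sumL_sum_below, Hq. f_equal.
    apply sum_below_ext; intros m _. rewrite sumL_scal_l.
    rewrite (pder_iter_shift_lincomb _ _ _ Hq). unfold lincomb. rewrite sumL_map. reflexivity.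
  - rewrite !Rplus_0_r, (sumL_ext _ (fun _ => 0)), sumL_zero; [lra|].
    intros r _. rewrite Lpoly_at0. ring.
Qed.

Lemma Lmono_shift n a b :
  peval (Lmono cm1 c n) (a + b)
  = peval (Lmono cm1 c n) a
    + sum_below (S n) (fun k => Binomial.C n k * a ^ k * peval (Lmono cm1 c (n - k)) b).
Proof.
  set (l := map (fun k => (Binomial.C n k * a ^ k, pmono (n - k))) (seq 0 (S n))).
  assert (Hl : forall y, peval (pmono n) (a + y) = lincomb l y).
  { intros y. unfold lincomb, l. rewrite peval_pmono, binomial_sum_below.
    rewrite sumL_map, sumL_seq. apply sum_below_ext; intros. simpl. rewrite peval_pmono; auto. }
  rewrite <- !Lpoly_pmono, (Lpoly_shift_lincomb _ _ _ Hl).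
  unfold l. rewrite sumL_map, sumL_seq. f_equal.
  apply sum_below_ext; intros. simpl. rewrite Lpoly_pmono. auto.
Qed.

Lemma Lpoly_is_1cocycle : is_1cocycle cm1 c.
Proof.
  intros p a b. rewrite !peval_Lpoly. unfold lsum.
  change (fold_right Rplus 0 (map ?h ?l)) with (sumL h l).
  rewrite sumL_seq, <- sum_below_plus. apply sum_below_ext; intros.
  rewrite Lmono_shift, sum_f_R0_sum_below. lra.
Qed.

End LOperator.

(** * Rooted trees, coproduct and antipode *)

Fixpoint tree_forest_ind (P : tree -> Prop) (H : forall ch, Forall P ch -> P (Node ch))
  (t : tree) : P t :=
  match t with
  | Node ch => H ch ((fix go (l : list tree) : Forall P l :=
                       match l with
                       | nil => Forall_nil P
                       | t' :: l' => Forall_cons t' (tree_forest_ind P H t') (go l')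
                       end) ch)
  end.

Lemma tsize_Node ch : tsize (Node ch) = S (fsize ch).
Proof. reflexivity. Qed.

Lemma fsize_cons t w : fsize (t :: w) = (tsize t + fsize w)%nat.
Proof. reflexivity. Qed.

Lemma fsize_Node_single ch : fsize (Node ch :: nil) = S (fsize ch).
Proof. rewrite fsize_cons, tsize_Node. simpl. lia. Qed.

Lemma fsize_app u v : fsize (u ++ v) = (fsize u + fsize v)%nat.
Proof. induction u; [reflexivity|]. rewrite <- app_comm_cons, !fsize_cons, IHu; lia. Qed.

Lemma tsize_pos t : (1 <= tsize t)%nat.
Proof. destruct t; rewrite tsize_Node; lia. Qed.

Lemma tsize_le_fsize t w : In t w -> (tsize t <= fsize w)%nat.
Proof.
  induction w; intros Hin; [contradiction|]. rewrite fsize_cons.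
  destruct Hin as [<-|Hin]; [lia|]. specialize (IHw Hin); lia.
Qed.

Lemma tcoprod_Node ch :
  tcoprod (Node ch) = (Node ch :: nil, nil) :: map (fun p => (fst p, Node (snd p) :: nil)) (fcoprod ch).
Proof. reflexivity. Qed.

Lemma fcoprod_cons t w : fcoprod (t :: w) = cross (tcoprod t) (fcoprod w).
Proof. reflexivity. Qed.

Lemma in_cross (A B : list (forest * forest)) p :
  In p (cross A B) -> exists a b, In a A /\ In b B /\ p = (fst a ++ fst b, snd a ++ snd b).
Proof.
  unfold cross. intros H. apply in_flat_map in H. destruct H as [a [Ha H]].
  apply in_map_iff in H. destruct H as [b [E Hb]]. exists a, b; auto.
Qed.

Lemma fcoprod_size w :
  forall p, In p (fcoprod w) -> (fsize (fst p) + fsize (snd p) = fsize w)%nat.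
Proof.
  enough (Ht : forall t p, In p (tcoprod t) -> (fsize (fst p) + fsize (snd p) = tsize t)%nat).
  { induction w as [|t w IH]; intros p.
    - intros [<-|[]]; reflexivity.
    - rewrite fcoprod_cons. intros H. apply in_cross in H. destruct H as [a [b [Ha [Hb ->]]]].
      cbn [fst snd]. rewrite !fsize_app, fsize_cons. apply Ht in Ha. apply IH in Hb. lia. }
  intros t. induction t as [ch IH] using tree_forest_ind.
  rewrite tcoprod_Node, tsize_Node. intros p [<-|H].
  - cbn [fst snd]. rewrite fsize_Node_single. change (fsize nil) with 0%nat. lia.
  - apply in_map_iff in H. destruct H as [[q1 q2] [<- Hq]]. cbn [fst snd] in *.
    rewrite fsize_Node_single.
    enough (fsize q1 + fsize q2 = fsize ch)%nat by lia.
    clear w. revert q1 q2 Hq. induction IH as [|t w Ht Hw IHw]; intros q1 q2.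
    + intros [E|[]]. injection E as <- <-. reflexivity.
    + rewrite fcoprod_cons. intros H. apply in_cross in H. destruct H as [a [b [Ha [Hb E]]]].
      injection E as -> ->. rewrite !fsize_app, fsize_cons. apply Ht in Ha.
      destruct b as [b1 b2]. apply IHw in Hb. cbn [fst snd] in *. lia.
Qed.

Lemma in_fcoprod_tsize ch p t :
  In p (fcoprod ch) -> In t (fst p) -> (tsize t <= fsize ch)%nat.
Proof. intros Hp Ht. apply fcoprod_size in Hp. apply tsize_le_fsize in Ht. lia. Qed.

Definition forest_prod (f : tree -> R) (w : forest) : R := fold_right (fun t r => f t * r) 1 w.

Lemma forest_prod_ext f g w :
  (forall t, In t w -> f t = g t) -> forest_prod f w = forest_prod g w.
Proof. induction w; simpl; intros H; auto. rewrite H, IHw; auto. Qed.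

Lemma forest_prod_app f u v : forest_prod f (u ++ v) = forest_prod f u * forest_prod f v.
Proof. induction u; simpl; [lra|]. rewrite IHu; lra. Qed.

Definition multiplicative (g : forest -> R) : Prop :=
  g nil = 1 /\ forall u v, g (u ++ v) = g u * g v.

Definition tensor_eval (g h : forest -> R) (l : list (forest * forest)) : R :=
  sumL (fun p => g (fst p) * h (snd p)) l.

Lemma tensor_eval_cross g h A B :
  multiplicative g -> multiplicative h ->
  tensor_eval g h (cross A B) = tensor_eval g h A * tensor_eval g h B.
Proof.
  intros [_ Hg] [_ Hh]. unfold tensor_eval, cross. rewrite sumL_flat_map, <- sumL_scal_r.
  apply sumL_ext; intros [x1 x2] _. rewrite sumL_map, <- sumL_scal_l.
  apply sumL_ext; intros [y1 y2] _. simpl. rewrite Hg, Hh. ring.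
Qed.

Lemma lc_eval_mul g A B :
  multiplicative g -> lc_eval g (lc_mul A B) = lc_eval g A * lc_eval g B.
Proof.
  intros [_ Hg]. unfold lc_eval, lc_mul. change (fold_right Rplus 0 (map ?f ?l)) with (sumL f l).
  rewrite sumL_flat_map, <- sumL_scal_r. apply sumL_ext; intros [x1 x2] _.
  rewrite sumL_map, <- sumL_scal_l. apply sumL_ext; intros [y1 y2] _. simpl. rewrite Hg. ring.
Qed.

Lemma lc_eval_lc_prod g (f : tree -> lc) w :
  multiplicative g ->
  lc_eval g (fold_right (fun t acc => lc_mul (f t) acc) ((1, nil) :: nil) w)
  = forest_prod (fun t => lc_eval g (f t)) w.
Proof.
  intros Hg. induction w; simpl.
  - unfold lc_eval; simpl. destruct Hg as [-> _]. lra.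
  - rewrite lc_eval_mul by auto. rewrite IHw; auto.
Qed.

Lemma lc_eval_tantip_S g n ch :
  multiplicative g ->
  lc_eval g (tantip (S n) (Node ch))
  = - sumL (fun p => forest_prod (fun t => lc_eval g (tantip n t)) (fst p) * g (Node (snd p) :: nil))
           (fcoprod ch).
Proof.
  intros Hg. cbn [tantip]. unfold lc_eval at 1.
  change (fold_right Rplus 0 (map ?f ?l)) with (sumL f l).
  rewrite sumL_flat_map, <- sumL_opp. apply sumL_ext; intros [p1 p2] _.
  rewrite sumL_map. cbn [fst snd]. rewrite <- lc_eval_lc_prod by auto.
  unfold lc_eval. change (fold_right Rplus 0 (map ?f ?l)) with (sumL f l).
  rewrite <- sumL_scal_r, <- sumL_opp. apply sumL_ext; intros [q1 q2] _.
  cbn [fst snd]. destruct Hg as [_ Hg]. rewrite Hg. ring.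
Qed.

Lemma lc_eval_tantip_fuel g :
  multiplicative g ->
  forall n m t, (tsize t <= n)%nat -> (tsize t <= m)%nat ->
  lc_eval g (tantip n t) = lc_eval g (tantip m t).
Proof.
  intros Hg n. induction n; intros m t Hn Hm; [pose proof (tsize_pos t); lia|].
  destruct m; [pose proof (tsize_pos t); lia|]. destruct t as [ch]. rewrite tsize_Node in *.
  rewrite !lc_eval_tantip_S by auto. f_equal. apply sumL_ext; intros p Hp. f_equal.
  apply forest_prod_ext; intros t Ht. pose proof (in_fcoprod_tsize _ _ _ Hp Ht).
  apply IHn; lia.
Qed.

Definition antipode_eval (g : forest -> R) (t : tree) : R := lc_eval g (S_tree t).

Lemma antipode_eval_Node g ch :
  multiplicative g ->
  antipode_eval g (Node ch)
  = - sumL (fun p => forest_prod (antipode_eval g) (fst p) * g (Node (snd p) :: nil)) (fcoprod ch).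
Proof.
  intros Hg. unfold antipode_eval, S_tree. rewrite tsize_Node, lc_eval_tantip_S by auto.
  f_equal. apply sumL_ext; intros p Hp. f_equal. apply forest_prod_ext; intros t Ht.
  pose proof (in_fcoprod_tsize _ _ _ Hp Ht). apply lc_eval_tantip_fuel; auto.
Qed.

Lemma lc_eval_S_forest g w :
  multiplicative g -> lc_eval g (S_forest w) = forest_prod (antipode_eval g) w.
Proof. apply lc_eval_lc_prod. Qed.

(** * phi_L is a Hopf algebra morphism *)

Section PhiL.

Variables (cm1 : R) (c : nat -> R).

Lemma phiL_cons t w : phiL cm1 c (t :: w) = pmul (phiL_t cm1 c t) (phiL cm1 c w).
Proof. reflexivity. Qed.

Lemma phiL_t_Node ch : phiL_t cm1 c (Node ch) = Lpoly cm1 c (phiL cm1 c ch).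
Proof. reflexivity. Qed.

Lemma peval_phiL_nil x : peval (phiL cm1 c nil) x = 1.
Proof. simpl. lra. Qed.

Lemma peval_phiL w x : peval (phiL cm1 c w) x = forest_prod (fun t => peval (phiL_t cm1 c t) x) w.
Proof. induction w; [apply peval_phiL_nil|]. rewrite phiL_cons, peval_pmul, IHw. reflexivity. Qed.

Lemma peval_phiL_app u v x :
  peval (phiL cm1 c (u ++ v)) x = peval (phiL cm1 c u) x * peval (phiL cm1 c v) x.
Proof. rewrite !peval_phiL, forest_prod_app. auto. Qed.

Lemma peval_phiL_single t x : peval (phiL cm1 c (t :: nil)) x = peval (phiL_t cm1 c t) x.
Proof. rewrite peval_phiL. simpl. lra. Qed.

Lemma phiL_multiplicative x : multiplicative (fun u => peval (phiL cm1 c u) x).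
Proof. split; [apply peval_phiL_nil|intros; apply peval_phiL_app]. Qed.

Lemma phiL_at0 w : peval (phiL cm1 c w) 0 = match w with nil => 1 | _ => 0 end.
Proof.
  destruct w; [apply peval_phiL_nil|]. rewrite phiL_cons, peval_pmul. destruct t.
  rewrite phiL_t_Node, Lpoly_at0. lra.
Qed.

Definition phiL_tensor (a b : R) : list (forest * forest) -> R :=
  tensor_eval (fun u => peval (phiL cm1 c u) a) (fun u => peval (phiL cm1 c u) b).

Lemma phiL_coprod_nil a b : peval (phiL cm1 c nil) (a + b) = phiL_tensor a b (fcoprod nil).
Proof.
  unfold phiL_tensor, tensor_eval. change (fcoprod nil) with ((nil, nil) :: nil : list (forest * forest)).
  rewrite sumL_cons. cbn [fst snd]. rewrite !peval_phiL_nil. unfold sumL; simpl; lra.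
Qed.

Lemma phiL_coprod_cons t w :
  (forall a b, peval (phiL_t cm1 c t) (a + b) = phiL_tensor a b (tcoprod t)) ->
  (forall a b, peval (phiL cm1 c w) (a + b) = phiL_tensor a b (fcoprod w)) ->
  forall a b, peval (phiL cm1 c (t :: w)) (a + b) = phiL_tensor a b (fcoprod (t :: w)).
Proof.
  intros Ht Hw a b. rewrite phiL_cons, peval_pmul, fcoprod_cons, Ht, Hw.
  unfold phiL_tensor. rewrite tensor_eval_cross; auto; apply phiL_multiplicative.
Qed.

Lemma phiL_t_coprod t a b : peval (phiL_t cm1 c t) (a + b) = phiL_tensor a b (tcoprod t).
Proof.
  revert a b. induction t as [ch IH] using tree_forest_ind.
  assert (Hch : forall a b, peval (phiL cm1 c ch) (a + b) = phiL_tensor a b (fcoprod ch)).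
  { induction IH as [|t w Ht _ IHw].
    - apply phiL_coprod_nil.
    - apply phiL_coprod_cons; auto. }
  intros a b. rewrite phiL_t_Node.
  rewrite (Lpoly_shift_lincomb cm1 c _ a
             (map (fun p => (peval (phiL cm1 c (fst p)) a, phiL cm1 c (snd p))) (fcoprod ch))).
  - unfold phiL_tensor, tensor_eval. rewrite tcoprod_Node, sumL_cons, !sumL_map. cbn [fst snd].
    rewrite peval_phiL_single, peval_phiL_nil, phiL_t_Node, Rmult_1_r. f_equal.
    apply sumL_ext; intros p _. rewrite peval_phiL_single. reflexivity.
  - intros y. rewrite Hch. unfold lincomb. rewrite sumL_map. reflexivity.
Qed.

Lemma phiL_coprod w a b : peval (phiL cm1 c w) (a + b) = phiL_tensor a b (fcoprod w).
Proof.
  revert a b. induction w as [|t w IH]; [apply phiL_coprod_nil|].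
  apply phiL_coprod_cons; auto. intros; apply phiL_t_coprod.
Qed.

(* Evaluating the coproduct identity at [(-a, a)] gives the antipode recursion. *)
Lemma phiL_antipode_tree a t :
  antipode_eval (fun u => peval (phiL cm1 c u) a) t = peval (phiL_t cm1 c t) (- a).
Proof.
  enough (H : forall n t, (tsize t <= n)%nat ->
     antipode_eval (fun u => peval (phiL cm1 c u) a) t = peval (phiL_t cm1 c t) (- a)) by eauto.
  intros n; induction n as [|n IHn]; intros [ch] Hn; rewrite tsize_Node in Hn.
  { lia. }
  rewrite antipode_eval_Node by apply phiL_multiplicative.
  pose proof (phiL_t_coprod (Node ch) (- a) a) as E.
  rewrite Rplus_opp_l, phiL_t_Node, Lpoly_at0 in E.
  unfold phiL_tensor, tensor_eval in E. rewrite tcoprod_Node, sumL_cons, sumL_map in E.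
  cbn [fst snd] in E. rewrite peval_phiL_single, peval_phiL_nil in E.
  rewrite (sumL_ext _ (fun p => peval (phiL cm1 c (fst p)) (- a)
                                * peval (phiL cm1 c (Node (snd p) :: nil)) a)); [lra|].
  intros p Hp. f_equal. rewrite peval_phiL. apply forest_prod_ext; intros t' Ht'.
  apply IHn. pose proof (in_fcoprod_tsize _ _ _ Hp Ht'). lia.
Qed.

Lemma phiL_hopf_morphism : hopf_morphism (phiL cm1 c).
Proof.
  split; [|split; [|split; [|split]]].
  - apply peval_phiL_nil.
  - apply peval_phiL_app.
  - intros; apply phiL_coprod.
  - apply phiL_at0.
  - intros w a. rewrite lc_eval_S_forest by apply phiL_multiplicative.
    rewrite peval_phiL. apply forest_prod_ext; intros. apply phiL_antipode_tree.
Qed.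

End PhiL.

(** * Limits as z -> 0 *)

Definition nonzero (z : R) : Prop := z <> 0.

Notation lim0 f l := (limit1_in f nonzero l 0).

Lemma lim0_of_linear_bound f l K d :
  0 < d -> (forall z, z <> 0 -> Rabs z < d -> Rabs (f z - l) <= K * Rabs z) -> lim0 f l.
Proof.
  intros Hd H eps Heps. set (K' := Rabs K + 1).
  assert (HK' : 0 < K') by (unfold K'; pose proof (Rabs_pos K); lra).
  exists (Rmin d (eps / K')). split; [apply Rmin_pos; auto; apply Rdiv_lt_0_compat; auto|].
  intros z [Hz Hzd]. simpl in *. unfold Rdist in *. rewrite Rminus_0_r in Hzd.
  assert (Rabs z < d) by (eapply Rlt_le_trans; [apply Hzd|apply Rmin_l]).
  assert (Hze : Rabs z < eps / K') by (eapply Rlt_le_trans; [apply Hzd|apply Rmin_r]).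
  eapply Rle_lt_trans; [apply H; auto|].
  apply Rle_lt_trans with (K' * Rabs z).
  - apply Rmult_le_compat_r; [apply Rabs_pos|]. unfold K'; pose proof (Rle_abs K); lra.
  - apply (Rmult_lt_compat_l K') in Hze; auto. replace (K' * (eps / K')) with eps in Hze by (field; lra).
    auto.
Qed.

Lemma lim0_const a : lim0 (fun _ => a) a.
Proof. apply (limit_free (fun _ => a) nonzero 0 0). Qed.

Lemma lim0_ext f g l : (forall z, z <> 0 -> f z = g z) -> lim0 f l -> lim0 g l.
Proof.
  intros E H eps Heps. destruct (H eps Heps) as [a [Ha Hb]].
  exists a; split; auto. intros z [Hz1 Hz2]. rewrite <- E; auto.
Qed.

Lemma lim0_val f l l' : l = l' -> lim0 f l -> lim0 f l'.
Proof. intros; subst; auto. Qed.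

Lemma lim0_plus f g l l' : lim0 f l -> lim0 g l' -> lim0 (fun z => f z + g z) (l + l').
Proof. apply limit_plus. Qed.

Lemma lim0_mul f g l l' : lim0 f l -> lim0 g l' -> lim0 (fun z => f z * g z) (l * l').
Proof. apply limit_mul. Qed.

Lemma lim0_scal a f l : lim0 f l -> lim0 (fun z => a * f z) (a * l).
Proof. intros. apply lim0_mul; auto. apply lim0_const. Qed.

Lemma lim0_sum_below n (f : nat -> R -> R) (l : nat -> R) :
  (forall i, (i < n)%nat -> lim0 (f i) (l i)) ->
  lim0 (fun z => sum_below n (fun i => f i z)) (sum_below n l).
Proof.
  induction n; intros H; [simpl; apply lim0_const|].
  apply lim0_plus; [apply IHn; intros; apply H|apply H]; lia.
Qed.

Lemma lim0_pow j : lim0 (fun z => z ^ j) (0 ^ j).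
Proof.
  induction j; [apply (lim0_ext (fun _ => 1)); [reflexivity|apply lim0_const]|].
  apply lim0_mul; auto. apply lim_x.
Qed.

Lemma lim0_opp_pow n : lim0 (fun z => (- z) ^ n) ((- 0) ^ n).
Proof.
  apply (lim0_ext (fun z => (-1) ^ n * z ^ n)).
  { intros. rewrite <- Rpow_mult_distr. f_equal; ring. }
  apply lim0_val with ((-1) ^ n * 0 ^ n); [rewrite <- Rpow_mult_distr; f_equal; ring|].
  apply lim0_scal, lim0_pow.
Qed.

Lemma lim0_of_pow_bound f K d j :
  0 < d -> (1 <= j)%nat ->
  (forall z, z <> 0 -> Rabs z < d -> Rabs (f z) <= K * Rabs z ^ j) -> lim0 f 0.
Proof.
  intros Hd Hj H. apply (lim0_of_linear_bound _ _ (Rabs K) (Rmin d 1)); [apply Rmin_pos; lra|].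
  intros z Hz Hzd.
  assert (Rabs z < d) by (eapply Rlt_le_trans; [apply Hzd|apply Rmin_l]).
  assert (Rabs z < 1) by (eapply Rlt_le_trans; [apply Hzd|apply Rmin_r]).
  rewrite Rminus_0_r. eapply Rle_trans; [apply H; auto|].
  destruct j as [|j]; [lia|]. simpl. rewrite <- Rmult_assoc.
  assert (0 <= Rabs z ^ j <= 1).
  { split; [apply pow_le, Rabs_pos|]. rewrite <- (pow1 j). apply pow_incr.
    split; [apply Rabs_pos|lra]. }
  assert (K <= Rabs K) by apply Rle_abs. pose proof (Rabs_pos z).
  assert (0 <= Rabs K * Rabs z) by (apply Rmult_le_pos; auto; apply Rabs_pos).
  assert (K * Rabs z <= Rabs K * Rabs z) by (apply Rmult_le_compat_r; lra).
  destruct (Rle_dec 0 (K * Rabs z)).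
  - apply Rle_trans with (K * Rabs z * 1); [apply Rmult_le_compat_l|]; lra.
  - nra.
Qed.

Lemma geometric_sum_le x m : 0 <= x <= 1/2 -> sum_below m (fun i => x ^ i) <= 2 - 2 * x ^ m.
Proof.
  intros Hx. induction m; simpl; [lra|]. assert (0 <= x ^ m) by (apply pow_le; lra).
  assert (x ^ m * (1 - 2 * x) >= 0) by (apply Rle_ge, Rmult_le_pos; lra). nra.
Qed.

Lemma series_tail_le (a : nat -> R) Sv A x M :
  infinite_sum a Sv -> 0 <= x <= 1/2 -> 0 <= A ->
  (forall i, (M <= i)%nat -> Rabs (a i) <= A * x ^ i) ->
  Rabs (Sv - sum_below M a) <= 2 * A * x ^ M.
Proof.
  intros HS Hx HA H.
  assert (Hpart : forall n, Rabs (sum_below (M + n) a - sum_below M a) <= 2 * A * x ^ M).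
  { intros n. rewrite sum_below_add.
    replace (sum_below M a + sum_below n (fun i => a (M + i)%nat) - sum_below M a)
      with (sum_below n (fun i => a (M + i)%nat)) by ring.
    eapply Rle_trans; [apply sum_below_abs|].
    eapply Rle_trans; [apply sum_below_le with (g := fun i => A * x ^ M * x ^ i)|].
    { intros. rewrite Rmult_assoc, <- pow_add. apply H; lia. }
    rewrite sum_below_scal_l. pose proof (geometric_sum_le x n Hx).
    assert (0 <= x ^ n) by (apply pow_le; lra).
    assert (0 <= A * x ^ M) by (apply Rmult_le_pos; auto; apply pow_le; lra).
    replace (2 * A * x ^ M) with (A * x ^ M * 2) by ring.
    change (sum_below n (pow x)) with (sum_below n (fun i => x ^ i)).
    apply Rmult_le_compat_l; lra. }
  apply Rnot_lt_le. intros Hc.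
  destruct (HS (Rabs (Sv - sum_below M a) - 2 * A * x ^ M)) as [N HN]; [lra|].
  specialize (HN (N + M)%nat ltac:(lia)). unfold Rdist in HN.
  rewrite sum_f_R0_sum_below in HN. replace (S (N + M)) with (M + S N)%nat in HN by lia.
  specialize (Hpart (S N)).
  assert (Rabs (Sv - sum_below M a) <= Rabs (sum_below (M + S N) a - Sv)
                                        + Rabs (sum_below (M + S N) a - sum_below M a)).
  { replace (Sv - sum_below M a)
      with (- (sum_below (M + S N) a - Sv) + (sum_below (M + S N) a - sum_below M a)) by ring.
    eapply Rle_trans; [apply Rabs_triang|]. rewrite Rabs_Ropp. lra. }
  lra.
Qed.

Lemma exp_taylor_le y J :
  Rabs y <= 1/2 -> Rabs (exp y - sum_below J (fun j => y ^ j / INR (fact j))) <= 2 * Rabs y ^ J.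
Proof.
  intros Hy. destruct (exist_exp y) as [l Hl] eqn:E.
  assert (exp y = l) by (unfold exp; rewrite E; auto). subst l.
  rewrite (sum_below_ext J _ (fun j => / INR (fact j) * y ^ j)) by (intros; unfold Rdiv; ring).
  replace (2 * Rabs y ^ J) with (2 * 1 * Rabs y ^ J) by ring.
  apply series_tail_le; auto; [split; [apply Rabs_pos|auto]|lra|].
  intros i _. rewrite Rabs_mult, <- RPow_abs, Rabs_inv, Rabs_pos_eq, Rmult_1_l by apply pos_INR.
  rewrite <- (Rmult_1_l (Rabs y ^ i)) at 2. apply Rmult_le_compat_r; [apply pow_le, Rabs_pos|].
  assert (1 <= INR (fact i)) by (apply (le_INR 1); pose proof (lt_O_fact i); lia).
  rewrite <- Rinv_1. apply Rinv_le_contravar; lra.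
Qed.

Lemma exp_le_mono a b : a <= b -> exp a <= exp b.
Proof. intros [H|H]; [left; apply exp_increasing; auto|subst; lra]. Qed.

Lemma lim0_exp_linear a : lim0 (fun z => exp (a * z)) 1.
Proof.
  apply (lim0_of_linear_bound _ _ (2 * Rabs a) (/ (2 * (Rabs a + 1)))).
  { apply Rinv_0_lt_compat. pose proof (Rabs_pos a); lra. }
  intros z Hz Hzd.
  assert (Haz : Rabs (a * z) <= 1/2).
  { rewrite Rabs_mult. pose proof (Rabs_pos a). pose proof (Rabs_pos z).
    assert (Rabs z * (2 * (Rabs a + 1)) < 1).
    { apply (Rmult_lt_compat_r (2 * (Rabs a + 1))) in Hzd; [|lra]. rewrite Rinv_l in Hzd; lra. }
    nra. }
  pose proof (exp_taylor_le (a * z) 1 Haz) as H. simpl in H.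
  replace (0 + 1 / 1) with 1 in H by field. rewrite Rabs_mult in H. lra.
Qed.

Lemma series_terms_bounded a Sv :
  infinite_sum a Sv -> exists A, 0 <= A /\ forall n, Rabs (a n) <= A.
Proof.
  intros H. destruct (H 1) as [N HN]; [lra|].
  set (T := sum_below (S N) (fun i => Rabs (a i))).
  assert (HT : 0 <= T) by (apply sum_below_nonneg; intros; apply Rabs_pos).
  exists (2 + T). split; [lra|]. intros n.
  destruct (le_lt_dec n N).
  - assert (Rabs (a n) <= T) by (apply (sum_below_term_le (fun i => Rabs (a i)));
                                  [intros; apply Rabs_pos|lia]). lra.
  - destruct n as [|n]; [lia|].
    pose proof (HN (S n) ltac:(lia)) as Ha. pose proof (HN n ltac:(lia)) as Hb.
    unfold Rdist in Ha, Hb. rewrite !sum_f_R0_sum_below in Ha, Hb.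
    change (sum_below (S (S n)) a) with (sum_below (S n) a + a (S n)) in Ha.
    replace (a (S n)) with ((sum_below (S n) a + a (S n) - Sv) - (sum_below (S n) a - Sv)) by ring.
    eapply Rle_trans; [apply Rabs_triang|]. rewrite Rabs_Ropp. lra.
Qed.

Definition laurent_expansion (F : R -> R) (cm1 : R) (cs : nat -> R) (r : R) : Prop :=
  forall z, 0 < Rabs z < r -> infinite_sum (fun n => cs n * z ^ n) (F z - cm1 / z).

Definition laurent_remainder (F : R -> R) (cm1 : R) (cs : nat -> R) (M : nat) (u : R) : R :=
  F u - cm1 / u - sum_below M (fun m => cs m * u ^ m).

Section Laurent.

Variables (F : R -> R) (cm1 : R) (cs : nat -> R) (r : R).
Hypotheses (Hr : 0 < r) (HF : laurent_expansion F cm1 cs r).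

(* Comparison with a geometric series, at half the radius of a point where the terms are bounded. *)
Lemma laurent_remainder_bound M :
  exists d C, 0 < d /\ 0 <= C /\
    forall u, 0 < Rabs u < d -> Rabs (laurent_remainder F cm1 cs M u) <= C * Rabs u ^ M.
Proof.
  set (z0 := r / 2).
  assert (Hz0 : 0 < Rabs z0 < r) by (unfold z0; rewrite Rabs_pos_eq; lra).
  assert (Hpz : 0 < z0) by (unfold z0; lra).
  destruct (series_terms_bounded _ _ (HF z0 Hz0)) as [A [HA HAb]].
  exists (z0 / 2), (2 * A / z0 ^ M). split; [lra|]. split.
  { apply Rmult_le_pos; [lra|]. apply Rlt_le, Rinv_0_lt_compat, pow_lt; lra. }
  intros u Hu. assert (Hu' : 0 < Rabs u < r) by (unfold z0 in *; lra).
  assert (Hx : 0 <= Rabs u / z0 <= 1 / 2).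
  { split; [apply Rmult_le_pos; [apply Rabs_pos|apply Rlt_le, Rinv_0_lt_compat; auto]|].
    apply (Rmult_le_reg_r z0); auto. unfold Rdiv; rewrite Rmult_assoc, Rinv_l by lra. lra. }
  assert (Hterm : forall i, (M <= i)%nat -> Rabs (cs i * u ^ i) <= A * (Rabs u / z0) ^ i).
  { intros i _. rewrite Rabs_mult, <- RPow_abs.
    specialize (HAb i). rewrite Rabs_mult, <- RPow_abs, (Rabs_pos_eq z0) in HAb by lra.
    assert (0 < z0 ^ i) by (apply pow_lt; auto).
    assert (Rabs (cs i) <= A / z0 ^ i).
    { apply (Rmult_le_reg_r (z0 ^ i)); auto. unfold Rdiv; rewrite Rmult_assoc, Rinv_l; lra. }
    assert (0 <= Rabs u ^ i) by (apply pow_le, Rabs_pos).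
    apply Rle_trans with (A / z0 ^ i * Rabs u ^ i); [apply Rmult_le_compat_r; auto|].
    unfold Rdiv. rewrite Rpow_mult_distr, pow_inv. right; field. apply pow_nonzero; lra. }
  pose proof (series_tail_le _ _ A (Rabs u / z0) M (HF u Hu') Hx HA Hterm) as E.
  replace (2 * A / z0 ^ M * Rabs u ^ M) with (2 * A * (Rabs u / z0) ^ M); [apply E|].
  unfold Rdiv. rewrite Rpow_mult_distr, pow_inv. field. apply pow_nonzero; lra.
Qed.

Lemma laurent_pole_bound :
  exists d B, 0 < d /\ 0 <= B /\ forall u, 0 < Rabs u < d -> Rabs (F u) <= B / Rabs u.
Proof.
  destruct (laurent_remainder_bound 0) as [d [C [Hd [HC Hb]]]].
  exists d, (Rabs cm1 + C * d). split; auto. split; [pose proof (Rabs_pos cm1); nra|].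
  intros u Hu. specialize (Hb u Hu). unfold laurent_remainder in Hb. simpl in Hb.
  rewrite Rminus_0_r, Rmult_1_r in Hb.
  assert (u <> 0) by (intro; subst; rewrite Rabs_R0 in Hu; lra).
  apply (Rmult_le_reg_r (Rabs u)); [lra|].
  unfold Rdiv; rewrite Rmult_assoc, Rinv_l, Rmult_1_r by lra.
  replace (F u) with ((F u - cm1 / u) + cm1 / u) by ring.
  eapply Rle_trans; [apply Rmult_le_compat_r; [apply Rabs_pos|apply Rabs_triang]|].
  rewrite Rmult_plus_distr_r. unfold Rdiv.
  rewrite Rabs_mult, Rabs_inv, Rmult_assoc, Rinv_l by (apply Rabs_no_R0; auto).
  assert (Rabs (F u - cm1 * / u) * Rabs u <= C * d) by (apply Rmult_le_compat; try apply Rabs_pos; lra).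
  lra.
Qed.

End Laurent.

(** * The regularized Feynman rules *)

Section Regularized.

Variable F : R -> R.

Definition Fprod (z : R) (u : forest) : R := forest_prod (tprodF F z) u.

Lemma tprodF_Node z ch : tprodF F z (Node ch) = F (z * INR (S (fsize ch))) * Fprod z ch.
Proof. reflexivity. Qed.

Lemma Fprod_single_Node z ch : Fprod z (Node ch :: nil) = F (z * INR (S (fsize ch))) * Fprod z ch.
Proof. change (Fprod z (Node ch :: nil)) with (tprodF F z (Node ch) * 1). rewrite tprodF_Node. ring. Qed.

Lemma Fprod_multiplicative z : multiplicative (Fprod z).
Proof. split; [reflexivity|intros; apply forest_prod_app]. Qed.

Definition Sprod (z : R) (u : forest) : R := lc_eval (Fprod z) (S_forest u).

Lemma Sprod_nil z : Sprod z nil = 1.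
Proof. unfold Sprod. rewrite lc_eval_S_forest by apply Fprod_multiplicative. reflexivity. Qed.

Lemma Sprod_app z u v : Sprod z (u ++ v) = Sprod z u * Sprod z v.
Proof.
  unfold Sprod. rewrite !lc_eval_S_forest by apply Fprod_multiplicative. apply forest_prod_app.
Qed.

(* [dphiR k z t l] is the [k]-th [t]-derivative of the regularized rule at [s = mu e^t], with the
   factor [mu^(-z|w|)] removed (see [phi_R_decompose]). *)
Definition dphiR (k : nat) (z t : R) (l : list (forest * forest)) : R :=
  sumL (fun p => Sprod z (fst p) * Fprod z (snd p) * (- (z * INR (fsize (snd p)))) ^ k
                 * exp (- (z * INR (fsize (snd p))) * t)) l.

Lemma forest_prod_exp_weight (h : tree -> R) b w :
  forest_prod (fun t => exp (b * INR (tsize t)) * h t) w = exp (b * INR (fsize w)) * forest_prod h w.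
Proof.
  induction w; simpl; [rewrite Rmult_0_r, exp_0; lra|].
  rewrite IHw. change (fold_right (fun t n => (tsize t + n)%nat) 0%nat w) with (fsize w).
  rewrite plus_INR, Rmult_plus_distr_l, exp_plus. ring.
Qed.

Lemma weight_multiplicative g b :
  multiplicative g -> multiplicative (fun u => exp (b * INR (fsize u)) * g u).
Proof.
  intros [H0 H1]. split; [simpl; rewrite H0, Rmult_0_r, exp_0; ring|].
  intros. rewrite H1, fsize_app, plus_INR, Rmult_plus_distr_l, exp_plus. ring.
Qed.

(* The antipode preserves the grading, so it commutes with the weight [s^|w|]. *)
Lemma lc_eval_tantip_weight g b :
  multiplicative g ->
  forall n t, lc_eval (fun u => exp (b * INR (fsize u)) * g u) (tantip n t)
              = exp (b * INR (tsize t)) * lc_eval g (tantip n t).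
Proof.
  intros Hg n. induction n; intros t; [unfold lc_eval; simpl; ring|].
  destruct t as [ch]. rewrite !lc_eval_tantip_S by (auto; apply weight_multiplicative; auto).
  rewrite <- Ropp_mult_distr_r, <- sumL_scal_l. f_equal. apply sumL_ext; intros [p1 p2] Hp.
  cbn [fst snd]. rewrite (forest_prod_ext _ (fun t => exp (b * INR (tsize t)) * lc_eval g (tantip n t)))
    by (intros; apply IHn).
  rewrite forest_prod_exp_weight. pose proof (fcoprod_size _ _ Hp) as Hs. cbn [fst snd] in Hs.
  rewrite tsize_Node, fsize_Node_single, <- Hs, !S_INR, !plus_INR.
  replace (b * (INR (fsize p1) + INR (fsize p2) + 1))
    with (b * INR (fsize p1) + b * (INR (fsize p2) + 1)) by ring.
  rewrite exp_plus. ring.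
Qed.

Lemma lc_eval_S_forest_weight g b w :
  multiplicative g ->
  lc_eval (fun u => exp (b * INR (fsize u)) * g u) (S_forest w)
  = exp (b * INR (fsize w)) * lc_eval g (S_forest w).
Proof.
  intros Hg. rewrite !lc_eval_S_forest by (auto; apply weight_multiplicative; auto).
  rewrite <- forest_prod_exp_weight. apply forest_prod_ext; intros.
  unfold antipode_eval, S_tree. apply lc_eval_tantip_weight; auto.
Qed.

Lemma lc_eval_ext g1 g2 A : (forall u, g1 u = g2 u) -> lc_eval g1 A = lc_eval g2 A.
Proof. intros H. unfold lc_eval. f_equal. apply map_ext. intros; rewrite H; auto. Qed.

Lemma phi_R_decompose mu z s w :
  0 < mu -> 0 < s ->
  phi_R F mu z s w = exp (- (z * INR (fsize w)) * ln mu) * dphiR 0 z (ln (s / mu)) (fcoprod w).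
Proof.
  intros Hmu Hs. unfold phi_R, dphiR.
  change (fold_right Rplus 0 (map ?f ?l)) with (sumL f l).
  rewrite <- sumL_scal_l. apply sumL_ext. intros [p1 p2] Hp. cbn [fst snd].
  pose proof (fcoprod_size _ _ Hp) as Hsz. cbn [fst snd] in Hsz.
  rewrite (lc_eval_ext _ (fun u => exp ((- z * ln mu) * INR (fsize u)) * Fprod z u)).
  2:{ intros u. unfold phi_s, Rpower, Fprod. f_equal. f_equal. ring. }
  rewrite lc_eval_S_forest_weight by apply Fprod_multiplicative. fold (Sprod z p1).
  unfold phi_s, Rpower. fold (Fprod z p2). rewrite <- Hsz, plus_INR.
  unfold Rdiv. rewrite ln_mult, ln_Rinv by (auto; apply Rinv_0_lt_compat; auto).
  rewrite pow_O, Rmult_1_r. change (fold_right _ 1 p2) with (Fprod z p2).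
  assert (E : exp (- z * ln mu * INR (fsize p1)) * exp (- (z * INR (fsize p2)) * ln s)
              = exp (- (z * (INR (fsize p1) + INR (fsize p2))) * ln mu)
                * exp (- (z * INR (fsize p2)) * (ln s + - ln mu)))
    by (rewrite <- !exp_plus; f_equal; ring).
  transitivity (exp (- z * ln mu * INR (fsize p1)) * exp (- (z * INR (fsize p2)) * ln s)
                * (Sprod z p1 * Fprod z p2)); [ring|].
  rewrite E. ring.
Qed.

Lemma forest_prod_bound (f K : tree -> R) L w :
  0 <= L -> (forall t, In t w -> Rabs (f t) <= K t * L ^ tsize t) ->
  Rabs (forest_prod f w) <= forest_prod K w * L ^ fsize w.
Proof.
  intros HL; induction w; intros H; [simpl; rewrite Rabs_R1; lra|].
  simpl. rewrite Rabs_mult. fold (forest_prod f w) (forest_prod K w).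
  change (fold_right (fun t n => (tsize t + n)%nat) 0%nat w) with (fsize w).
  rewrite pow_add.
  replace (K a * forest_prod K w * (L ^ tsize a * L ^ fsize w))
    with ((K a * L ^ tsize a) * (forest_prod K w * L ^ fsize w)) by ring.
  apply Rmult_le_compat; try apply Rabs_pos; [apply H; simpl; auto|].
  apply IHw; intros; apply H; simpl; auto.
Qed.

Lemma forest_prod_one w : forest_prod (fun _ => 1) w = 1.
Proof. induction w; simpl; auto. fold (forest_prod (fun _ => 1) w). rewrite IHw; lra. Qed.

Lemma forest_prod_bound_uniform (f : tree -> R) L w :
  0 <= L -> (forall t, In t w -> Rabs (f t) <= L ^ tsize t) ->
  Rabs (forest_prod f w) <= L ^ fsize w.
Proof.
  intros HL H. rewrite <- (Rmult_1_l (L ^ fsize w)), <- (forest_prod_one w).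
  apply forest_prod_bound; auto. intros; rewrite Rmult_1_l; auto.
Qed.

Section FprodBound.

Variables (z d B : R).
Hypotheses (HB : 0 <= B) (Hz : z <> 0) (HF : forall u, 0 < Rabs u < d -> Rabs (F u) <= B / Rabs u).

Lemma pole_ratio_nonneg : 0 <= B / Rabs z.
Proof. apply Rmult_le_pos; auto. apply Rlt_le, Rinv_0_lt_compat, Rabs_pos_lt; auto. Qed.

(* Each vertex of [w] contributes a factor [F(z |w_v|) = O(1/z)]. *)
Lemma Fprod_bound u : Rabs z * INR (fsize u) < d -> Rabs (Fprod z u) <= (B / Rabs z) ^ fsize u.
Proof.
  assert (Hzp : 0 < Rabs z) by (apply Rabs_pos_lt; auto).
  enough (Ht : forall t, Rabs z * INR (tsize t) < d -> Rabs (tprodF F z t) <= (B / Rabs z) ^ tsize t).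
  { intros Hs. apply forest_prod_bound_uniform; [apply pole_ratio_nonneg|]. intros t Ht'.
    apply Ht. apply tsize_le_fsize, le_INR in Ht'. pose proof (Rabs_pos z). nra. }
  intros t. induction t as [ch IH] using tree_forest_ind. intros Hs.
  rewrite tprodF_Node, Rabs_mult. rewrite tsize_Node in *. simpl (_ ^ S _).
  apply Rmult_le_compat; try apply Rabs_pos.
  - assert (Hn : 1 <= INR (S (fsize ch))) by (apply (le_INR 1); lia).
    eapply Rle_trans; [apply HF|].
    + rewrite Rabs_mult, (Rabs_pos_eq (INR _)) by apply pos_INR. split; auto. nra.
    + unfold Rdiv. apply Rmult_le_compat_l; auto.
      rewrite Rabs_mult, (Rabs_pos_eq (INR _)) by apply pos_INR. apply Rinv_le_contravar; auto. nra.
  - apply forest_prod_bound_uniform; [apply pole_ratio_nonneg|]. intros t Ht.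
    rewrite Forall_forall in IH. apply IH; auto.
    apply tsize_le_fsize, le_INR in Ht. rewrite S_INR in Hs. pose proof (Rabs_pos z). nra.
Qed.

End FprodBound.

(* A bound on [|lc_eval g (S t)|] depending only on the shape of [t]. *)
Fixpoint antipode_const (n : nat) (t : tree) : R :=
  match n with
  | O => 0
  | S n' => match t with Node ch => sumL (fun p => forest_prod (antipode_const n') (fst p)) (fcoprod ch) end
  end.

Definition Sprod_const (u : forest) : R := forest_prod (fun t => antipode_const (tsize t) t) u.

Lemma lc_eval_tantip_bound g L N :
  0 <= L -> multiplicative g -> (forall u, (fsize u <= N)%nat -> Rabs (g u) <= L ^ fsize u) ->
  forall n t, (tsize t <= N)%nat -> Rabs (lc_eval g (tantip n t)) <= antipode_const n t * L ^ tsize t.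
Proof.
  intros HL Hg Hb n. induction n; intros t Ht; [unfold lc_eval; simpl; rewrite Rabs_R0; lra|].
  destruct t as [ch]. rewrite lc_eval_tantip_S, Rabs_Ropp by auto. simpl antipode_const.
  rewrite <- sumL_scal_r. eapply Rle_trans; [apply sumL_abs|]. apply sumL_le. intros [p1 p2] Hp.
  cbn [fst snd]. pose proof (fcoprod_size _ _ Hp) as Hs. cbn [fst snd] in Hs. rewrite tsize_Node in *.
  rewrite Rabs_mult. replace (S (fsize ch)) with (fsize p1 + fsize (Node p2 :: nil))%nat
    by (rewrite fsize_Node_single; lia).
  rewrite pow_add, <- Rmult_assoc. apply Rmult_le_compat; try apply Rabs_pos.
  - apply forest_prod_bound; auto. intros t Ht'. apply IHn.
    pose proof (in_fcoprod_tsize ch (p1, p2) t Hp Ht'). lia.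
  - apply Hb. rewrite fsize_Node_single. lia.
Qed.

Lemma Sprod_bound z L N u :
  0 <= L -> (forall u, (fsize u <= N)%nat -> Rabs (Fprod z u) <= L ^ fsize u) ->
  (fsize u <= N)%nat -> Rabs (Sprod z u) <= Sprod_const u * L ^ fsize u.
Proof.
  intros HL Hb Hu. unfold Sprod. rewrite lc_eval_S_forest by apply Fprod_multiplicative.
  apply forest_prod_bound; auto. intros t Ht. unfold antipode_eval, S_tree.
  apply (lc_eval_tantip_bound _ L N); auto; [apply Fprod_multiplicative|].
  apply tsize_le_fsize in Ht; lia.
Qed.

(* Leibniz rule for [d^k/dt^k], on the regularized side. *)
Lemma dphiR_cross k z t A B :
  dphiR k z t (cross A B)
  = sum_below (S k) (fun i => Binomial.C k i * dphiR i z t A * dphiR (k - i) z t B).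
Proof.
  set (term := fun (j : nat) (p : forest * forest) =>
         Sprod z (fst p) * Fprod z (snd p) * (- (z * INR (fsize (snd p)))) ^ j
         * exp (- (z * INR (fsize (snd p))) * t)).
  unfold dphiR, cross. fold (term k). rewrite sumL_flat_map.
  rewrite (sumL_ext _ (fun a => sum_below (S k)
             (fun i => sumL (fun b => Binomial.C k i * term i a * term (k - i)%nat b) B))).
  - rewrite sumL_sum_below. apply sum_below_ext; intros i _.
    rewrite (sumL_ext _ (fun a => Binomial.C k i * sumL (term (k - i)%nat) B * term i a))
      by (intros; rewrite <- sumL_scal_l, <- sumL_scal_r; apply sumL_ext; intros; ring).
    rewrite sumL_scal_l. fold (term i) (term (k - i)%nat). ring.
  - intros [a1 a2] _. rewrite sumL_map, <- sumL_sum_below. apply sumL_ext; intros [b1 b2] _.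
    unfold term; cbn [fst snd]. rewrite Sprod_app. unfold Fprod at 1. rewrite forest_prod_app.
    fold (Fprod z a2) (Fprod z b2). rewrite fsize_app, plus_INR.
    replace (- (z * (INR (fsize a2) + INR (fsize b2))))
      with (- (z * INR (fsize a2)) + - (z * INR (fsize b2))) by ring.
    rewrite binomial_sum_below, Rmult_plus_distr_r, exp_plus.
    rewrite <- sum_below_scal_l, <- sum_below_scal_r. apply sum_below_ext; intros. ring.
Qed.

(* The argument of [F] at the new root of [B_+ (snd p)]. *)
Definition root_arg (z : R) (p : forest * forest) : R := z * INR (S (fsize (snd p))).

Lemma root_arg_nonzero z p : z <> 0 -> root_arg z p <> 0.
Proof. intros Hz. unfold root_arg. apply Rmult_integral_contrapositive; split; auto. apply not_0_INR; lia. Qed.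

Definition root_term (z : R) (p : forest * forest) : R :=
  Sprod z (fst p) * Fprod z (snd p) * F (root_arg z p).

Lemma dphiR_Node_S k z t ch :
  dphiR (S k) z t (tcoprod (Node ch))
  = sumL (fun p => root_term z p * (- root_arg z p) ^ S k * exp (- root_arg z p * t)) (fcoprod ch).
Proof.
  unfold dphiR. rewrite tcoprod_Node, sumL_cons, sumL_map. cbn [fst snd].
  change (fsize nil) with 0%nat. rewrite Rmult_0_r, Ropp_0, pow_i, Rmult_0_r, Rmult_0_l, Rplus_0_l by lia.
  apply sumL_ext; intros [p1 p2] _. cbn [fst snd].
  rewrite Fprod_single_Node, fsize_Node_single. unfold root_term, root_arg; cbn [fst snd]. ring.
Qed.

(* At order 0 the term [B_+ ch (x) 1] is cancelled by the antipode recursion, leaving [e^(-u t) - 1]. *)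
Lemma dphiR_Node_0 z t ch :
  dphiR 0 z t (tcoprod (Node ch))
  = sumL (fun p => root_term z p * (exp (- root_arg z p * t) - 1)) (fcoprod ch).
Proof.
  unfold dphiR. rewrite tcoprod_Node, sumL_cons, sumL_map. cbn [fst snd].
  change (fsize nil) with 0%nat. rewrite Rmult_0_r, Ropp_0, Rmult_0_l, exp_0.
  unfold Sprod at 1. rewrite lc_eval_S_forest by apply Fprod_multiplicative. simpl forest_prod.
  rewrite antipode_eval_Node by apply Fprod_multiplicative. change (Fprod z nil) with 1.
  rewrite (sumL_ext (fun p => root_term z p * (exp (- root_arg z p * t) - 1))
                    (fun p => root_term z p * exp (- root_arg z p * t) + - root_term z p))
    by (intros; ring).
  rewrite sumL_plus, sumL_opp, pow_O.
  assert (E1 : sumL (fun p => forest_prod (antipode_eval (Fprod z)) (fst p) * Fprod z (Node (snd p) :: nil))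
                    (fcoprod ch) = sumL (root_term z) (fcoprod ch)).
  { apply sumL_ext. intros [p1 p2] _. unfold root_term, Sprod, root_arg. cbn [fst snd].
    rewrite lc_eval_S_forest, Fprod_single_Node by apply Fprod_multiplicative. ring. }
  assert (E2 : sumL (fun p => Sprod z (fst p) * Fprod z (Node (snd p) :: nil)
                              * (- (z * INR (fsize (Node (snd p) :: nil)))) ^ 0
                              * exp (- (z * INR (fsize (Node (snd p) :: nil))) * t)) (fcoprod ch)
               = sumL (fun p => root_term z p * exp (- root_arg z p * t)) (fcoprod ch)).
  { apply sumL_ext. intros [p1 p2] _. unfold root_term, root_arg. cbn [fst snd].
    rewrite Fprod_single_Node, fsize_Node_single. ring. }
  rewrite E1, E2. ring.
Qed.

(* Since [root_arg z p = z |snd p| + z], powers of [- root_arg] expand binomially into [dphiR]. *)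
Definition dphiR_shift (j : nat) (z t : R) (l : list (forest * forest)) : R :=
  sum_below (S j) (fun i => Binomial.C j i * (- z) ^ (j - i) * dphiR i z t l).

Lemma dphiR_shift_sumL z t ch j :
  sumL (fun p => Sprod z (fst p) * Fprod z (snd p) * (- root_arg z p) ^ j
                 * exp (- (z * INR (fsize (snd p))) * t)) (fcoprod ch)
  = dphiR_shift j z t (fcoprod ch).
Proof.
  unfold dphiR_shift, dphiR.
  rewrite (sum_below_ext (S j) _ (fun i => sumL (fun p => Binomial.C j i * (- z) ^ (j - i) *
             (Sprod z (fst p) * Fprod z (snd p) * (- (z * INR (fsize (snd p)))) ^ i
              * exp (- (z * INR (fsize (snd p))) * t))) (fcoprod ch)))
    by (intros; rewrite sumL_scal_l; auto).
  rewrite <- sumL_sum_below. apply sumL_ext; intros p _.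
  unfold root_arg. rewrite S_INR.
  replace (- (z * (INR (fsize (snd p)) + 1))) with (- (z * INR (fsize (snd p))) + - z) by ring.
  rewrite binomial_sum_below, <- !sum_below_scal_l, <- sum_below_scal_r.
  apply sum_below_ext; intros. ring.
Qed.

Lemma laurent_split Fu cm1 (cs : nat -> R) M u k :
  u <> 0 ->
  Fu * (- u) ^ S k
  = - cm1 * (- u) ^ k + sum_below M (fun m => cs m * (-1) ^ m * (- u) ^ (m + S k))
    + (Fu - cm1 / u - sum_below M (fun m => cs m * u ^ m)) * (- u) ^ S k.
Proof.
  intros Hu. rewrite !Rmult_minus_distr_r, <- sum_below_scal_r.
  rewrite (sum_below_ext M (fun m => cs m * (-1) ^ m * (- u) ^ (m + S k))
             (fun i => cs i * u ^ i * (- u) ^ S k)).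
  - simpl pow. field. auto.
  - intros i _. rewrite pow_add. replace (- u) with ((-1) * u) at 1 by ring.
    rewrite Rpow_mult_distr.
    transitivity (cs i * ((-1) ^ i * (-1) ^ i) * u ^ i * (- u) ^ S k); [ring|].
    rewrite <- pow_add. replace (i + i)%nat with (2 * i)%nat by lia. rewrite pow_1_even. ring.
Qed.

Lemma dphiR_Node_laurent cm1 cs M k z t ch :
  z <> 0 ->
  dphiR (S k) z t (tcoprod (Node ch))
  = exp (- z * t) * (- cm1 * dphiR_shift k z t (fcoprod ch)
                     + sum_below M (fun m => cs m * (-1) ^ m * dphiR_shift (m + S k) z t (fcoprod ch)))
    + sumL (fun p => Sprod z (fst p) * Fprod z (snd p) * laurent_remainder F cm1 cs M (root_arg z p)
                     * (- root_arg z p) ^ S k * exp (- root_arg z p * t)) (fcoprod ch).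
Proof.
  intros Hz. rewrite dphiR_Node_S, <- dphiR_shift_sumL.
  rewrite (sum_below_ext M _ (fun m => sumL (fun p => cs m * (-1) ^ m *
             (Sprod z (fst p) * Fprod z (snd p) * (- root_arg z p) ^ (m + S k)
              * exp (- (z * INR (fsize (snd p))) * t))) (fcoprod ch)))
    by (intros; rewrite <- dphiR_shift_sumL, sumL_scal_l; auto).
  rewrite <- sumL_sum_below, <- sumL_scal_l, <- sumL_plus, <- sumL_scal_l, <- sumL_plus.
  apply sumL_ext. intros p _.
  replace (exp (- root_arg z p * t)) with (exp (- z * t) * exp (- (z * INR (fsize (snd p))) * t))
    by (rewrite <- exp_plus; f_equal; unfold root_arg; rewrite S_INR; ring).
  unfold root_term. rewrite (Rmult_assoc (_ * _) (F _)), (laurent_split _ cm1 cs M _ k)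
    by (apply root_arg_nonzero; auto).
  unfold laurent_remainder.
  rewrite (sum_below_ext M (fun m => cs m * (-1) ^ m * (Sprod z (fst p) * Fprod z (snd p)
             * (- root_arg z p) ^ (m + S k) * exp (- (z * INR (fsize (snd p))) * t)))
             (fun m => Sprod z (fst p) * Fprod z (snd p) * exp (- (z * INR (fsize (snd p))) * t)
                       * (cs m * (-1) ^ m * (- root_arg z p) ^ (m + S k)))) by (intros; ring).
  rewrite sum_below_scal_l. ring.
Qed.

Lemma dphiR_Node_taylor z t ch J :
  dphiR 0 z t (tcoprod (Node ch))
  = sum_below J (fun j => t ^ S j / INR (fact (S j)) * dphiR (S j) z 0 (tcoprod (Node ch)))
    + sumL (fun p => root_term z p * (exp (- root_arg z p * t)
             - sum_below (S J) (fun j => (- root_arg z p * t) ^ j / INR (fact j)))) (fcoprod ch).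
Proof.
  rewrite dphiR_Node_0.
  rewrite (sum_below_ext J _ (fun j => sumL (fun p => t ^ S j / INR (fact (S j)) *
     (root_term z p * (- root_arg z p) ^ S j * exp (- root_arg z p * 0))) (fcoprod ch)))
    by (intros; rewrite dphiR_Node_S, sumL_scal_l; auto).
  rewrite <- sumL_sum_below, <- sumL_plus. apply sumL_ext; intros p _.
  rewrite (sum_below_ext J _ (fun j => root_term z p * ((- root_arg z p * t) ^ S j / INR (fact (S j)))))
    by (intros; rewrite Rmult_0_r, exp_0, Rpow_mult_distr; field; apply INR_fact_neq0).
  rewrite sum_below_scal_l, sum_below_Sl. simpl (INR (fact 0)). rewrite pow_O. field.
Qed.

End Regularized.

(** * Convergence of the regularized rules *)

Definition dphiR_converges (F : R -> R) (l : list (forest * forest)) (P : poly) : Prop :=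
  forall k t, lim0 (fun z => dphiR F k z t l) (peval (pder_iter k P) t).

Lemma dphiR_converges_nil F cm1 cs : dphiR_converges F (fcoprod nil) (phiL cm1 cs nil).
Proof.
  intros k t. rewrite peval_pder_iter. simpl. unfold dmono.
  apply (lim0_ext (fun _ => match k with O => 1 | S _ => 0 end)).
  - intros z _. unfold dphiR. change (fcoprod nil) with ((nil, nil) :: nil : list (forest * forest)).
    rewrite sumL_cons. cbn [fst snd]. rewrite Sprod_nil. change (fsize nil) with 0%nat.
    change (Fprod F z nil) with 1. unfold sumL; simpl.
    rewrite Rmult_0_r, Ropp_0, Rmult_0_l, exp_0. destruct k; simpl; ring.
  - destruct k; simpl; [apply lim0_val with 1; [field|]|apply lim0_val with 0; [ring|]];
      apply lim0_const.
Qed.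

Lemma dphiR_converges_cons F t w P1 P2 :
  dphiR_converges F (tcoprod t) P1 -> dphiR_converges F (fcoprod w) P2 ->
  dphiR_converges F (fcoprod (t :: w)) (pmul P1 P2).
Proof.
  intros H1 H2 k x. rewrite fcoprod_cons, peval_pder_iter_pmul.
  apply (lim0_ext (fun z => sum_below (S k) (fun i => Binomial.C k i * dphiR F i z x (tcoprod t)
                                                      * dphiR F (k - i) z x (fcoprod w))));
    [intros; rewrite dphiR_cross; auto|].
  apply lim0_sum_below. intros i _. apply lim0_mul; [apply lim0_scal|]; auto.
Qed.

Lemma lim0_dphiR_shift F l q :
  dphiR_converges F l q -> forall j t, lim0 (fun z => dphiR_shift F j z t l) (peval (pder_iter j q) t).
Proof.
  intros HG j t. unfold dphiR_shift.
  apply lim0_val with (sum_below (S j) (fun i => Binomial.C j i * (- 0) ^ (j - i) * peval (pder_iter i q) t)).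
  - simpl sum_below. rewrite sum_below_zero, binom_n_n, Nat.sub_diag; [simpl; ring|].
    intros. rewrite Ropp_0, pow_i by lia. ring.
  - apply lim0_sum_below. intros i _. apply lim0_mul; [apply lim0_scal, lim0_opp_pow|apply HG].
Qed.

Section Convergence.

Variables (F : R -> R) (cm1 : R) (cs : nat -> R) (r : R).
Hypotheses (Hr : 0 < r) (HF : laurent_expansion F cm1 cs r).

Lemma root_arg_bound z ch p :
  In p (fcoprod ch) -> 0 < Rabs (root_arg z p) <= Rabs z * (INR (fsize ch) + 1) \/ z = 0.
Proof.
  intros Hp. destruct (Req_dec z 0) as [->|Hz]; [right; auto|left].
  split; [apply Rabs_pos_lt, root_arg_nonzero; auto|].
  pose proof (fcoprod_size _ _ Hp) as Hs.
  unfold root_arg. rewrite Rabs_mult, (Rabs_pos_eq (INR _)) by apply pos_INR.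
  apply Rmult_le_compat_l; [apply Rabs_pos|]. rewrite S_INR.
  apply Rplus_le_compat_r, le_INR. lia.
Qed.

(* Terms of total order [|z|^(|ch| + j)] beat the [O(1/z)] factors carried by the [|ch|] vertices. *)
Lemma remainder_vanishes ch (W : R -> forest * forest -> R) cW d j :
  0 < d -> (1 <= j)%nat ->
  (forall z p, z <> 0 -> Rabs z < d -> In p (fcoprod ch) -> Rabs (W z p) <= cW * Rabs z ^ (fsize ch + j)) ->
  lim0 (fun z => sumL (fun p => Sprod F z (fst p) * Fprod F z (snd p) * W z p) (fcoprod ch)) 0.
Proof.
  intros Hd Hj HW. set (N := fsize ch).
  destruct (laurent_pole_bound F cm1 cs r Hr HF) as [dF [B [HdF [HB HFb]]]].
  assert (HN1 : 0 < INR N + 1) by (pose proof (pos_INR N); lra).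
  apply (lim0_of_pow_bound _ (sumL (fun p => Sprod_const (fst p)) (fcoprod ch) * B ^ N * cW)
           (Rmin d (dF / (INR N + 1))) j); auto; [apply Rmin_pos; auto; apply Rdiv_lt_0_compat; auto|].
  intros z Hz Hzd.
  assert (Hzp : 0 < Rabs z) by (apply Rabs_pos_lt; auto).
  assert (Hzs : Rabs z * INR N < dF).
  { assert (Rabs z < dF / (INR N + 1)) by (eapply Rlt_le_trans; [apply Hzd|apply Rmin_r]).
    apply (Rmult_lt_compat_r (INR N + 1)) in H; auto.
    unfold Rdiv in H. rewrite Rmult_assoc, Rinv_l in H by lra. nra. }
  set (L := B / Rabs z). assert (HL : 0 <= L) by (apply pole_ratio_nonneg; auto).
  assert (HG : forall u, (fsize u <= N)%nat -> Rabs (Fprod F z u) <= L ^ fsize u).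
  { intros u Hu. apply (Fprod_bound F z dF B); auto. apply le_INR in Hu. pose proof (Rabs_pos z). nra. }
  eapply Rle_trans; [apply sumL_abs|]. rewrite <- !sumL_scal_r. apply sumL_le. intros [p1 p2] Hp.
  cbn [fst snd]. pose proof (fcoprod_size _ _ Hp) as Hs. cbn [fst snd] in Hs. rewrite !Rabs_mult.
  assert (H1 : Rabs (Sprod F z p1) <= Sprod_const p1 * L ^ fsize p1) by (apply (Sprod_bound F z L N); auto; lia).
  assert (H2 : Rabs (Fprod F z p2) <= L ^ fsize p2) by (apply HG; lia).
  assert (H3 : Rabs (W z (p1, p2)) <= cW * Rabs z ^ (N + j))
    by (apply HW; auto; eapply Rlt_le_trans; [apply Hzd|apply Rmin_l]).
  apply Rle_trans with (Sprod_const p1 * L ^ fsize p1 * L ^ fsize p2 * (cW * Rabs z ^ (N + j))).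
  - apply Rmult_le_compat; try apply Rabs_pos; [apply Rmult_le_pos; apply Rabs_pos| |auto].
    apply Rmult_le_compat; try apply Rabs_pos; auto.
  - right. rewrite (Rmult_assoc (Sprod_const p1)), <- pow_add, Hs, !pow_add.
    fold N. unfold L, Rdiv. rewrite Rpow_mult_distr, pow_inv. field. apply pow_nonzero. lra.
Qed.

Lemma scaled_lt_of_lt_div z d N : Rabs z < d / (INR N + 1) -> Rabs z * (INR N + 1) < d.
Proof.
  intros H. pose proof (pos_INR N). apply (Rmult_lt_compat_r (INR N + 1)) in H; [|lra].
  unfold Rdiv in H. rewrite Rmult_assoc, Rinv_l in H by lra. lra.
Qed.

Lemma pow_le_of_abs_le a b n : Rabs a <= b -> Rabs a ^ n <= b ^ n.
Proof. intros. apply pow_incr. split; auto. apply Rabs_pos. Qed.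

Lemma laurent_term_bound M dM CM k t ch z p :
  (forall u, 0 < Rabs u < dM -> Rabs (laurent_remainder F cm1 cs M u) <= CM * Rabs u ^ M) ->
  z <> 0 -> Rabs z * (INR (fsize ch) + 1) < Rmin dM 1 -> In p (fcoprod ch) ->
  Rabs (laurent_remainder F cm1 cs M (root_arg z p) * (- root_arg z p) ^ S k * exp (- root_arg z p * t))
  <= CM * (INR (fsize ch) + 1) ^ (M + S k) * exp (Rabs t) * Rabs z ^ (M + S k).
Proof.
  intros HRm Hz Hzs Hp.
  destruct (root_arg_bound z ch p Hp) as [[Hu0 Hu]|]; [|contradiction].
  set (u := root_arg z p) in *. set (N := fsize ch) in *.
  assert (HuM : Rabs u < dM) by (pose proof (Rmin_l dM 1); lra).
  assert (Hu1 : Rabs u <= 1) by (pose proof (Rmin_r dM 1); lra).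
  assert (HCM : 0 <= CM).
  { specialize (HRm u (conj Hu0 HuM)). pose proof (Rabs_pos (laurent_remainder F cm1 cs M u)).
    assert (0 < Rabs u ^ M) by (apply pow_lt; auto).
    destruct (Rle_dec 0 CM); auto. nra. }
  rewrite !Rabs_mult, <- RPow_abs, Rabs_Ropp.
  assert (HE : Rabs (exp (- u * t)) <= exp (Rabs t)).
  { rewrite Rabs_pos_eq by (apply Rlt_le, exp_pos). apply exp_le_mono.
    apply Rle_trans with (Rabs (- u * t)); [apply Rle_abs|]. rewrite Rabs_mult, Rabs_Ropp.
    pose proof (Rabs_pos t). pose proof (Rabs_pos u). nra. }
  assert (HuMk : Rabs u ^ (M + S k) <= (Rabs z * (INR N + 1)) ^ (M + S k)) by (apply pow_le_of_abs_le; auto).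
  rewrite Rpow_mult_distr in HuMk.
  pose proof (HRm u (conj Hu0 HuM)).
  assert (0 <= Rabs u ^ S k) by (apply pow_le, Rabs_pos).
  apply Rle_trans with (CM * Rabs u ^ (M + S k) * exp (Rabs t)).
  - rewrite pow_add. apply Rmult_le_compat; try apply Rabs_pos; auto.
    + apply Rmult_le_pos; [apply Rabs_pos|auto].
    + rewrite <- Rmult_assoc. apply Rmult_le_compat_r; auto.
  - pose proof (exp_pos (Rabs t)). pose proof (pow_le (INR N + 1) (M + S k)).
    assert (CM * Rabs u ^ (M + S k) <= CM * (Rabs z ^ (M + S k) * (INR N + 1) ^ (M + S k)))
      by (apply Rmult_le_compat_l; auto).
    nra.
Qed.

Lemma dphiR_converges_Node_S ch :
  dphiR_converges F (fcoprod ch) (phiL cm1 cs ch) ->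
  forall k t, lim0 (fun z => dphiR F (S k) z t (tcoprod (Node ch)))
                   (peval (pder_iter (S k) (phiL_t cm1 cs (Node ch))) t).
Proof.
  intros HG k t. rewrite phiL_t_Node.
  set (q := phiL cm1 cs ch) in *. set (N := fsize ch).
  set (M := Nat.max (length q) N).
  destruct (laurent_remainder_bound F cm1 cs r Hr HF M) as [dM [CM [HdM [HCM HRm]]]].
  rewrite (Lpoly_pder_iter_S cm1 cs q M k t) by (unfold M; lia).
  apply (lim0_ext _ _ _ (fun z Hz => eq_sym (dphiR_Node_laurent F cm1 cs M k z t ch Hz))).
  apply lim0_val with (1 * (- cm1 * peval (pder_iter k q) t
                            + sum_below M (fun m => cs m * (-1) ^ m * peval (pder_iter (m + S k) q) t)) + 0);
    [ring|].
  apply lim0_plus; [apply lim0_mul|].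
  - apply (lim0_ext (fun z => exp ((- t) * z))); [intros; f_equal; ring|apply lim0_exp_linear].
  - apply lim0_plus; [apply lim0_scal, lim0_dphiR_shift; auto|].
    apply lim0_sum_below; intros m _. apply lim0_scal, lim0_dphiR_shift; auto.
  - apply (lim0_ext (fun z => sumL (fun p => Sprod F z (fst p) * Fprod F z (snd p) *
             (laurent_remainder F cm1 cs M (root_arg z p) * (- root_arg z p) ^ S k
              * exp (- root_arg z p * t))) (fcoprod ch))); [intros; apply sumL_ext; intros; ring|].
    apply (remainder_vanishes ch _ (CM * (INR N + 1) ^ (M + S k) * exp (Rabs t))
             (Rmin dM 1 / (INR N + 1)) (M + S k - N)).
    + apply Rdiv_lt_0_compat; [apply Rmin_pos; lra|pose proof (pos_INR N); lra].
    + unfold M; lia.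
    + intros z p Hz Hzd Hp. fold N. replace (N + (M + S k - N))%nat with (M + S k)%nat by (unfold M; lia).
      apply (laurent_term_bound M dM CM); auto. apply scaled_lt_of_lt_div; auto.
Qed.

Lemma taylor_term_bound dF B J t ch z p :
  0 <= B -> (forall u, 0 < Rabs u < dF -> Rabs (F u) <= B / Rabs u) ->
  z <> 0 -> Rabs z * (INR (fsize ch) + 1) < dF ->
  Rabs z * (INR (fsize ch) + 1) * (2 * (Rabs t + 1)) < 1 -> In p (fcoprod ch) ->
  Rabs (F (root_arg z p) * (exp (- root_arg z p * t)
          - sum_below (S J) (fun j => (- root_arg z p * t) ^ j / INR (fact j))))
  <= 2 * B * Rabs t ^ S J * (INR (fsize ch) + 1) ^ J * Rabs z ^ J.
Proof.
  intros HB HFb Hz Hzs Hzt Hp.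
  destruct (root_arg_bound z ch p Hp) as [[Hu0 Hu]|]; [|contradiction].
  set (u := root_arg z p) in *. set (N := fsize ch) in *.
  pose proof (Rabs_pos t). pose proof (Rabs_pos z).
  assert (Hy : Rabs (- u * t) <= 1/2).
  { rewrite Rabs_mult, Rabs_Ropp. assert (Rabs u * (2 * (Rabs t + 1)) < 1) by nra. nra. }
  rewrite Rabs_mult.
  apply Rle_trans with (B / Rabs u * (2 * Rabs (- u * t) ^ S J)).
  { apply Rmult_le_compat; try apply Rabs_pos; [apply HFb; lra|apply exp_taylor_le; auto]. }
  rewrite Rabs_mult, Rabs_Ropp, Rpow_mult_distr. simpl pow.
  assert (HuJ : Rabs u ^ J <= (Rabs z * (INR N + 1)) ^ J) by (apply pow_le_of_abs_le; auto).
  rewrite Rpow_mult_distr in HuJ.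
  assert (0 <= 2 * B * (Rabs t * Rabs t ^ J)) by (apply Rmult_le_pos; [lra|apply Rmult_le_pos, pow_le; auto]).
  apply Rle_trans with (2 * B * (Rabs t * Rabs t ^ J) * Rabs u ^ J); [right; field; lra|].
  apply Rle_trans with (2 * B * (Rabs t * Rabs t ^ J) * (Rabs z ^ J * (INR N + 1) ^ J));
    [apply Rmult_le_compat_l; auto|right; ring].
Qed.

Lemma dphiR_converges_Node ch :
  dphiR_converges F (fcoprod ch) (phiL cm1 cs ch) ->
  dphiR_converges F (tcoprod (Node ch)) (phiL_t cm1 cs (Node ch)).
Proof.
  intros HG [|k] t; [|apply dphiR_converges_Node_S; auto].
  set (q := phiL_t cm1 cs (Node ch)). set (N := fsize ch).
  destruct (laurent_pole_bound F cm1 cs r Hr HF) as [dF [B [HdF [HB HFb]]]].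
  set (J := Nat.max (length q) (S N)).
  apply (lim0_ext _ _ _ (fun z _ => eq_sym (dphiR_Node_taylor F z t ch J))).
  apply lim0_val with (sum_below J (fun j => t ^ S j / INR (fact (S j)) * peval (pder_iter (S j) q) 0) + 0).
  { simpl (pder_iter 0 _). rewrite (peval_taylor _ t J), sum_below_Sl by (unfold J; lia).
    unfold q. rewrite phiL_t_Node at 1. simpl (pder_iter 0 _). rewrite Lpoly_at0. ring. }
  apply lim0_plus.
  - apply lim0_sum_below. intros j _. apply lim0_scal, dphiR_converges_Node_S; auto.
  - assert (Ht : 0 < 2 * (Rabs t + 1)) by (pose proof (Rabs_pos t); lra).
    assert (HN1 : 0 < INR N + 1) by (pose proof (pos_INR N); lra).
    apply (lim0_ext (fun z => sumL (fun p => Sprod F z (fst p) * Fprod F z (snd p) *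
             (F (root_arg z p) * (exp (- root_arg z p * t)
               - sum_below (S J) (fun j => (- root_arg z p * t) ^ j / INR (fact j))))) (fcoprod ch)));
      [intros; apply sumL_ext; intros; unfold root_term; ring|].
    apply (remainder_vanishes ch _ (2 * B * Rabs t ^ S J * (INR N + 1) ^ J)
             (Rmin dF (/ (2 * (Rabs t + 1))) / (INR N + 1)) (J - N)).
    + apply Rdiv_lt_0_compat; auto. apply Rmin_pos; auto. apply Rinv_0_lt_compat; auto.
    + unfold J; lia.
    + intros z p Hz Hzd Hp. fold N. replace (N + (J - N))%nat with J by (unfold J; lia).
      apply scaled_lt_of_lt_div in Hzd. unfold N in *.
      apply (taylor_term_bound dF); auto; [pose proof (Rmin_l dF (/ (2 * (Rabs t + 1)))); lra|].
      pose proof (Rmin_r dF (/ (2 * (Rabs t + 1)))).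
      apply (Rmult_lt_compat_r (2 * (Rabs t + 1))) in Hzd; auto.
      assert (Rmin dF (/ (2 * (Rabs t + 1))) * (2 * (Rabs t + 1)) <= 1); [|lra].
      apply Rle_trans with (/ (2 * (Rabs t + 1)) * (2 * (Rabs t + 1)));
        [apply Rmult_le_compat_r; lra|rewrite Rinv_l; lra].
Qed.

Lemma dphiR_converges_forest w : dphiR_converges F (fcoprod w) (phiL cm1 cs w).
Proof.
  enough (Ht : forall t, dphiR_converges F (tcoprod t) (phiL_t cm1 cs t)).
  { induction w; [apply dphiR_converges_nil|]. apply dphiR_converges_cons; auto. }
  intros t. induction t as [ch IH] using tree_forest_ind. apply dphiR_converges_Node.
  induction IH; [apply dphiR_converges_nil|]. apply dphiR_converges_cons; auto.
Qed.

End Convergence.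

Theorem mainTheorem7
  (f : R -> R) (c eps : R) (F : R -> R) (cm1 : R) (cs : nat -> R) (r mu : R) :
  cont_on_nonneg f ->
  0 < eps ->
  asymp_c_over f c eps ->
  (forall z, 0 < z < 1 -> mellin_at f z (F z)) ->
  0 < r ->
  (forall z, 0 < Rabs z < r ->
     infinite_sum (fun n => cs n * z ^ n) (F z - cm1 / z)) ->
  0 < mu ->
  is_1cocycle cm1 cs /\
  (forall (w : forest) (s : R), 0 < s ->
     limit1_in (fun z => phi_R F mu z s w) (fun z => z <> 0)
       (peval (phiL cm1 cs w) (ln (s / mu))) 0) /\
  hopf_morphism (phiL cm1 cs).
Proof.
  intros _ _ _ _ Hr HF Hmu.
  split; [apply Lpoly_is_1cocycle|split; [|apply phiL_hopf_morphism]].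
  intros w s Hs. change (fun z : R => z <> 0) with nonzero.
  apply (lim0_ext _ _ _ (fun z _ => eq_sym (phi_R_decompose F mu z s w Hmu Hs))).
  apply lim0_val with (1 * peval (pder_iter 0 (phiL cm1 cs w)) (ln (s / mu))); [simpl; ring|].
  apply lim0_mul.
  - apply (lim0_ext (fun z => exp (- (INR (fsize w) * ln mu) * z))); [intros; f_equal; ring|].
    apply lim0_exp_linear.
  - apply (dphiR_converges_forest F cm1 cs r Hr HF).
Qed.
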